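(* Let $[t_0,t_1]$ be an admissible segment of $\mathbf r$ with associated tetrahedron $\mathbf r_0\mathbf r_1\mathbf r_2\mathbf r_3$. For each $t^\star\in(t_0,t_1)$ the osculating plane $O(t^\star)$ meets the lines $\mathbf r_0\mathbf r_1$, $\mathbf r_1\mathbf r_2$, $\mathbf r_2\mathbf r_3$ in points $\mathbf r_{01},\mathbf r_{12},\mathbf r_{23}$ (depending on $t^\star$), and the distances $\|\mathbf r_0\mathbf r_{01}\|$, $\|\mathbf r_1\mathbf r_{12}\|$, $\|\mathbf r_2\mathbf r_{23}\|$ are strictly monotone functions of $t^\star\in(t_0,t_1)$.
   Context: Setting: $\mathbf r(t)=(x(t),y(t),z(t))$ with $x,y,z$ rational functions with real coefficients whose denominators do not vanish on the parameter interval, properly parametrized, and not contained in a plane. Curvature $\kappa=\|\mathbf r'\times\mathbf r''\|/\|\mathbf r'\|^3$; torsion $\tau$ vanishes exactly where $\det(\mathbf r',\mathbf r'',\mathbf r''')=0$. Unit tangent $\boldsymbol\alpha=\mathbf r'/\|\mathbf r'\|$, unit binormal $\boldsymbol\gamma=\mathbf r'\times\mathbf r''/\|\mathbf r'\times\mathbf r''\|$; one-sided limits $\boldsymbol\alpha^{\pm}(s)=\lim_{t\to s^\pm}\boldsymbol\alpha(t)$, $\boldsymbol\gamma^{\pm}(s)=\lim_{t\to s^\pm}\boldsymbol\gamma(t)$; tangent lines $T^{\pm}(s)=\{\mathbf r(s)+\lambda\boldsymbol\alpha^{\pm}(s)\}$, osculating planes $O^{\pm}(s)=\{X:(X-\mathbf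 r(s))\cdot\boldsymbol\gamma^{\pm}(s)=0\}$ (written $O(s)$ at interior ordinary points). A point is singular if it corresponds to more than one parameter counted with multiplicity; character points are singular points, inflections ($\kappa=0$) and torsion-vanishing points ($\tau=0$). Associated tetrahedron of $[a,b]$: vertices $\mathbf r(a)$, $T^+(a)\cap L$, $T^-(b)\cap L$, $\mathbf r(b)$ where $L=O^+(a)\cap O^-(b)$. Admissible segment: $t_0<t_1$, no parameter in $(t_0,t_1]$ gives a character point, and for all $t_0\le s_1<s_2\le t_1$: (I) $\boldsymbol\alpha^+(s_1)\cdot\boldsymbol\gamma^-(s_2)\ne0$ and $\boldsymbol\alpha^-(s_2)\cdot\boldsymbol\gamma^+(s_1)\ne0$; (II) $(\boldsymbol\alpha^+(s_1)\times(\mathbf r(s_2)-\mathbf r(s_1)))\cdot\boldsymbol\alpha^-(s_2)\ne0$; (III) $(\mathbf r(s_1)-\mathbf r(s_2))\cdot\boldsymbol\gamma^-(s_2)\ne0$ and $(\mathbf r(s_2)-\mathbf r(s_1))\cdot\boldsymbol\gamma^+(s_1)\ne0$; and (IV) for all $t_0\le s_1<s_2<s_3\le t_1$, $\det(\boldsymbol\alpha(s_1),\boldsymbol\alpha(s_2),\boldsymbol\alpha(s_3))\ne0$ (one-sided limits used at $t_0,t_1$). *)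

From Stdlib Require Import Reals List.
Open Scope R_scope.

Record V3 := mkV3 { vx : R; vy : R; vz : R }.
Definition vadd (u v : V3) := mkV3 (vx u + vx v) (vy u + vy v) (vz u + vz v).
Definition vsub (u v : V3) := mkV3 (vx u - vx v) (vy u - vy v) (vz u - vz v).
Definition vscale (k : R) (u : V3) := mkV3 (k * vx u) (k * vy u) (k * vz u).
Definition dot (u v : V3) := vx u * vx v + vy u * vy v + vz u * vz v.
Definition cross (u v : V3) :=
  mkV3 (vy u * vz v - vz u * vy v) (vz u * vx v - vx u * vz v) (vx u * vy v - vy u * vx v).
Definition vnorm (u : V3) := sqrt (dot u u).
Definition det3 (a b c : V3) := dot a (cross b c).
Definition v0 := mkV3 0 0 0.

(* ---------- real polynomials (coefficient lists, constant term first) ---------- *)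
Definition poly := list R.
Definition peval (p : poly) (x : R) : R := fold_right (fun a acc => a + x * acc) 0 p.
Fixpoint padd (p q : poly) : poly :=
  match p, q with
  | nil, _ => q
  | _, nil => p
  | a :: p', b :: q' => (a + b) :: padd p' q'
  end.
Definition pscale (k : R) (p : poly) : poly := map (fun a => k * a) p.
Fixpoint pmul (p q : poly) : poly :=
  match p with
  | nil => nil
  | a :: p' => padd (pscale a q) (0 :: pmul p' q)
  end.
Definition psub (p q : poly) : poly := padd p (pscale (-1) q).
Fixpoint pderiv_aux (k : nat) (p : poly) : poly :=
  match p with
  | nil => nil
  | a :: p' => (INR k * a) :: pderiv_aux (S k) p'
  end.
Definition pderiv (p : poly) : poly :=
  match p with nil => nil | _ :: p' => pderiv_aux 1 p' end.

Definition C := (R * R)%type.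
Definition cadd (z w : C) : C := (fst z + fst w, snd z + snd w).
Definition cmul (z w : C) : C := (fst z * fst w - snd z * snd w, fst z * snd w + snd z * fst w).
Definition ofR (x : R) : C := (x, 0).
Definition pevalC (p : poly) (z : C) : C :=
  fold_right (fun a acc => cadd (ofR a) (cmul z acc)) (ofR 0) p.

Definition ratf := (poly * poly)%type.   (* (numerator, denominator) *)
Definition rf_eval (f : ratf) (t : R) : R := peval (fst f) t / peval (snd f) t.
Definition rf_deriv (f : ratf) : ratf :=
  (psub (pmul (pderiv (fst f)) (snd f)) (pmul (fst f) (pderiv (snd f))),
   pmul (snd f) (snd f)).

Record curve := mkCurve { cx : ratf; cy : ratf; cz : ratf }.
Definition cmap (F : ratf -> ratf) (r : curve) := mkCurve (F (cx r)) (F (cy r)) (F (cz r)).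
Definition pos (r : curve) (t : R) : V3 := mkV3 (rf_eval (cx r) t) (rf_eval (cy r) t) (rf_eval (cz r) t).
Definition rD (r : curve) := cmap rf_deriv r.
Definition d1 (r : curve) (t : R) := pos (rD r) t.
Definition d2 (r : curve) (t : R) := pos (rD (rD r)) t.
Definition d3 (r : curve) (t : R) := pos (rD (rD (rD r))) t.

Definition defined_at (r : curve) (t : R) : Prop :=
  peval (snd (cx r)) t <> 0 /\ peval (snd (cy r)) t <> 0 /\ peval (snd (cz r)) t <> 0.
Definition defined_atC (r : curve) (z : C) : Prop :=
  pevalC (snd (cx r)) z <> ofR 0 /\ pevalC (snd (cy r)) z <> ofR 0 /\ pevalC (snd (cz r)) z <> ofR 0.
(* r(z) = r(w) for complex parameters, written by cross-multiplication *)
Definition same_pointC (r : curve) (z w : C) : Prop :=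
  forall f, (f = cx r \/ f = cy r \/ f = cz r) ->
    cmul (pevalC (fst f) z) (pevalC (snd f) w) = cmul (pevalC (fst f) w) (pevalC (snd f) z).

Definition proper_param (r : curve) : Prop :=
  exists E : list C, forall z w : C, ~ In z E -> ~ In w E ->
    defined_atC r z -> defined_atC r w -> same_pointC r z w -> z = w.

Definition non_planar (r : curve) : Prop :=
  ~ exists (n : V3) (c : R), n <> v0 /\ forall t, defined_at r t -> dot n (pos r t) = c.

Definition curvature (r : curve) (t : R) : R :=
  vnorm (cross (d1 r t) (d2 r t)) / (vnorm (d1 r t)) ^ 3.
Definition torsion_vanishes (r : curve) (t : R) : Prop :=
  det3 (d1 r t) (d2 r t) (d3 r t) = 0.
Definition alpha (r : curve) (t : R) : V3 := vscale (/ vnorm (d1 r t)) (d1 r t).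
Definition gamma (r : curve) (t : R) : V3 :=
  vscale (/ vnorm (cross (d1 r t) (d2 r t))) (cross (d1 r t) (d2 r t)).

Definition rlim (f : R -> V3) (s : R) (v : V3) : Prop :=
  forall eps, 0 < eps -> exists del, 0 < del /\
    forall t, s < t < s + del -> vnorm (vsub (f t) v) < eps.
Definition llim (f : R -> V3) (s : R) (v : V3) : Prop :=
  forall eps, 0 < eps -> exists del, 0 < del /\
    forall t, s - del < t < s -> vnorm (vsub (f t) v) < eps.

(* the point r(s) corresponds to more than one parameter counted with multiplicity:
   either another (complex) parameter gives the same point, or s has multiplicity > 1
   (r'(s) = 0) *)
Definition singular_param (r : curve) (s : R) : Prop :=
  d1 r s = v0 \/
  exists z : C, z <> ofR s /\ defined_atC r z /\ same_pointC r z (ofR s).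
Definition character_param (r : curve) (s : R) : Prop :=
  singular_param r s \/ curvature r s = 0 \/ torsion_vanishes r s.

Definition admissible (r : curve) (t0 t1 : R) : Prop :=
  t0 < t1 /\
  (forall s, t0 < s <= t1 -> ~ character_param r s) /\
  (* (I) *)
  (forall s1 s2 a g, t0 <= s1 < s2 -> s2 <= t1 ->
     rlim (alpha r) s1 a -> llim (gamma r) s2 g -> dot a g <> 0) /\
  (forall s1 s2 a g, t0 <= s1 < s2 -> s2 <= t1 ->
     llim (alpha r) s2 a -> rlim (gamma r) s1 g -> dot a g <> 0) /\
  (* (II) *)
  (forall s1 s2 a1 a2, t0 <= s1 < s2 -> s2 <= t1 ->
     rlim (alpha r) s1 a1 -> llim (alpha r) s2 a2 ->
     dot (cross a1 (vsub (pos r s2) (pos r s1))) a2 <> 0) /\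
  (* (III) *)
  (forall s1 s2 g, t0 <= s1 < s2 -> s2 <= t1 ->
     llim (gamma r) s2 g -> dot (vsub (pos r s1) (pos r s2)) g <> 0) /\
  (forall s1 s2 g, t0 <= s1 < s2 -> s2 <= t1 ->
     rlim (gamma r) s1 g -> dot (vsub (pos r s2) (pos r s1)) g <> 0) /\
  (* (IV), one-sided limits at the ends *)
  (forall s1 s2 s3 a1 a3, t0 <= s1 < s2 -> s2 < s3 <= t1 ->
     rlim (alpha r) s1 a1 -> llim (alpha r) s3 a3 ->
     det3 a1 (alpha r s2) a3 <> 0).

Definition on_line (P Q X : V3) : Prop := exists l : R, X = vadd P (vscale l (vsub Q P)).
Definition on_plane (P n X : V3) : Prop := dot (vsub X P) n = 0.
Definition on_tangent (P a X : V3) : Prop := exists l : R, X = vadd P (vscale l a).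

(* r0 r1 r2 r3 is the associated tetrahedron of [t0,t1]:
   r0 = r(t0), r3 = r(t1), r1 = T^+(t0) ∩ L, r2 = T^-(t1) ∩ L, L = O^+(t0) ∩ O^-(t1) *)
Definition assoc_tetrahedron (r : curve) (t0 t1 : R) (r0 r1 r2 r3 : V3) : Prop :=
  exists a0 g0 a1 g1 : V3,
    rlim (alpha r) t0 a0 /\ rlim (gamma r) t0 g0 /\
    llim (alpha r) t1 a1 /\ llim (gamma r) t1 g1 /\
    r0 = pos r t0 /\ r3 = pos r t1 /\
    on_tangent (pos r t0) a0 r1 /\ on_plane (pos r t0) g0 r1 /\ on_plane (pos r t1) g1 r1 /\
    on_tangent (pos r t1) a1 r2 /\ on_plane (pos r t0) g0 r2 /\ on_plane (pos r t1) g1 r2.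

Definition unique_meet (r : curve) (t : R) (P Q X : V3) : Prop :=
  on_line P Q X /\ on_plane (pos r t) (gamma r t) X /\
  forall Y, on_line P Q Y -> on_plane (pos r t) (gamma r t) Y -> Y = X.

Definition strictly_monotone_on (a b : R) (f : R -> R) : Prop :=
  (forall x y, a < x -> x < y -> y < b -> f x < f y) \/
  (forall x y, a < x -> x < y -> y < b -> f y < f x).

From Pilot Require Import Defs.
From Stdlib Require Import Reals List Lra Ranalysis5.
Import Defs.
Open Scope R_scope.

(* Let [p] be an arc with velocity [v], acceleration [w] and third derivative [z], and
   let [c = v x w] be the normal of its osculating plane.  The osculating plane at [s]
   meets the line [P + lambda e] at [lambda(s) = ((p s - P).c s) / (e.c s)], and
     lambda'(s) = - det(v,w,z) det(p s - P, e, v s) / (e.c s)^2      ([osc_param_deriv]).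
   On an admissible segment the torsion determinant [det(v,w,z)] never vanishes, so
   [lambda] is strictly monotone along any edge that is never parallel to an osculating
   plane and never coplanar with the chord from [P] and the tangent; if moreover
   [lambda] never vanishes, the distance [|lambda| |e|] from [P] is strictly monotone
   ([osc_meet_dist_monotone]).

   For the edges [r0 r1] and [r2 r3], which lie on the end tangents, these conditions are
   reformulations of conditions (I)-(III).  The middle edge [r1 r2] is the real work: the
   osculating plane at [t] separates [r1] from [r2] ([r1_r2_opposite_sides]), because the
   parameters on [r0 r1] and [r2 r3] approach their limits 1 (at [t1]) and 0 (at [t0])
   monotonically, and two sign comparisons derived from (I) and (II)
   ([end_tangents_same_side], [end_chords_same_side]) relate the two rates; and the arc
   lies on definite sides of the two end osculating planes, which contain [r1 r2], so
   this edge is never coplanar with a chord and a tangent ([edge12_skew]). *)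

Lemma sign_persists f a b x y : a <= x <= b -> a <= y <= b ->
  (forall s, a <= s <= b -> continuity_pt f s) ->
  (forall s, a <= s <= b -> f s <> 0) -> f x * f y > 0.
Proof.
  intros Hx Hy Hc Hn.
  assert (Hxy : forall x y, a <= x <= y -> y <= b -> f x * f y > 0).
  { clear x y Hx Hy. intros x y Hxy Hyb.
    assert (Fx : f x <> 0) by (apply Hn; lra).
    assert (Fy : f y <> 0) by (apply Hn; lra).
    destruct (Req_dec x y) as [<-|Hne]; [nra|].
    assert (Hc' : forall s, x <= s <= y -> continuity_pt f s) by (intros; apply Hc; lra).
    destruct (Rlt_or_le (f x) 0) as [Nx|Px]; destruct (Rlt_or_le (f y) 0) as [Ny|Py];
      try nra; exfalso.
    - destruct (IVT_interv f x y Hc' ltac:(lra) Nx ltac:(lra)) as [s [Hs Fs]].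
      exact (Hn s ltac:(lra) Fs).
    - destruct (IVT_interv (fun s => - f s) x y) as [s [Hs Fs]]; try lra.
      + intros s Hs. apply continuity_pt_opp, Hc'; exact Hs.
      + apply (Hn s); lra. }
  destruct (Rle_or_lt x y).
  - apply Hxy; lra.
  - rewrite Rmult_comm. apply Hxy; lra.
Qed.

Lemma sign_persists_open f a b x y : a < x < b -> a < y < b ->
  (forall s, a < s < b -> continuity_pt f s) ->
  (forall s, a < s < b -> f s <> 0) -> f x * f y > 0.
Proof.
  intros Hx Hy Hc Hn.
  apply (sign_persists f (Rmin x y) (Rmax x y)).
  - split; [apply Rmin_l | apply Rmax_l].
  - split; [apply Rmin_r | apply Rmax_r].
  - intros s Hs. apply Hc. unfold Rmin, Rmax in Hs. destruct (Rle_dec x y); lra.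
  - intros s Hs. apply Hn. unfold Rmin, Rmax in Hs. destruct (Rle_dec x y); lra.
Qed.

Lemma same_sign_trans x y z : x * y > 0 -> y * z > 0 -> x * z > 0.
Proof.
  intros Hxy Hyz.
  assert (Hyy : 0 < y * y) by (apply Rsqr_pos_lt; intros ->; lra).
  assert (H : 0 < (x * z) * (y * y)) by (replace ((x * z) * (y * y)) with ((x * y) * (y * z)) by ring; nra).
  destruct (Rle_or_lt (x * z) 0); nra.
Qed.

Lemma same_sign_pos_factor_l k x y : 0 < k -> (k * x) * y > 0 -> x * y > 0.
Proof. intros Hk H. replace ((k * x) * y) with (k * (x * y)) in H by ring. nra. Qed.

Lemma same_sign_pos_factor_r k x y : 0 < k -> x * (k * y) > 0 -> x * y > 0.
Proof. intros Hk H. replace (x * (k * y)) with (k * (x * y)) in H by ring. nra. Qed.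

Lemma increasing_of_pos_deriv f f' a b :
  (forall x, a < x < b -> derivable_pt_lim f x (f' x)) ->
  (forall x, a < x < b -> f' x > 0) ->
  forall x y, a < x -> x < y -> y < b -> f x < f y.
Proof.
  intros Hd Hp x y Hax Hxy Hyb.
  destruct (MVT_cor2 f f' x y Hxy) as [c [Hc Hc']].
  - intros c Hc. apply Hd; lra.
  - assert (f' c > 0) by (apply Hp; lra). nra.
Qed.

Lemma strictly_monotone_of_deriv f f' a b :
  (forall x, a < x < b -> derivable_pt_lim f x (f' x)) ->
  (forall x y, a < x < b -> a < y < b -> f' x * f' y > 0) ->
  strictly_monotone_on a b f.
Proof.
  intros Hd Hs. destruct (Rle_or_lt b a) as [Hba|Hab]; [left; intros; lra|].
  set (m := (a + b) / 2). assert (Hm : a < m < b) by (unfold m; lra).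
  assert (Hm' := Hs m m Hm Hm).
  destruct (Rlt_or_le 0 (f' m)) as [Pos|Neg].
  - left. apply (increasing_of_pos_deriv f f' a b Hd).
    intros x Hx. specialize (Hs x m Hx Hm). nra.
  - right. intros x y Hax Hxy Hyb.
    assert (- f x < - f y); [|lra].
    apply (increasing_of_pos_deriv (fun s => - f s) (fun s => - f' s) a b); auto.
    + intros s Hs'. apply derivable_pt_lim_opp, Hd; exact Hs'.
    + intros s Hs'. specialize (Hs s m Hs' Hm). nra.
Qed.

Lemma abs_scaled_monotone f a b K : 0 < K ->
  (forall x, a < x < b -> continuity_pt f x) -> (forall x, a < x < b -> f x <> 0) ->
  strictly_monotone_on a b f -> strictly_monotone_on a b (fun t => Rabs (f t) * K).
Proof.
  intros HK Hc Hn Hm. destruct (Rle_or_lt b a) as [Hba|Hab]; [left; intros; lra|].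
  set (mid := (a + b) / 2). assert (Hmid : a < mid < b) by (unfold mid; lra).
  assert (Sg : forall x, a < x < b -> f x * f mid > 0)
    by (intros x Hx; apply (sign_persists_open f a b); auto).
  assert (Hfm := Hn mid Hmid).
  destruct (Rlt_or_le 0 (f mid)) as [Pos|Neg].
  - assert (Hpos : forall x, a < x < b -> Rabs (f x) = f x)
      by (intros x Hx; specialize (Sg x Hx); apply Rabs_right; nra).
    destruct Hm as [Hi|Hd]; [left|right]; intros x y H1 H2 H3;
      rewrite !Hpos by lra; apply Rmult_lt_compat_r; auto.
  - assert (Hneg : forall x, a < x < b -> Rabs (f x) = - f x)
      by (intros x Hx; specialize (Sg x Hx); apply Rabs_left; nra).
    destruct Hm as [Hi|Hd]; [right|left]; intros x y H1 H2 H3;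
      rewrite !Hneg by lra; apply Rmult_lt_compat_r; auto;
      [specialize (Hi x y H1 H2 H3) | specialize (Hd x y H1 H2 H3)]; lra.
Qed.

Lemma opposite_signs_of_rates a b K1 K2 E1 E3 :
  a * K1 < 0 -> b * K2 > 0 -> K1 * K2 * (E1 * E3) > 0 -> (a * E1) * (b * E3) < 0.
Proof.
  intros Ha Hb HK.
  assert (HP : (a * E1) * (b * E3) * ((K1 * K2) * (K1 * K2))
               = (a * K1) * (b * K2) * (K1 * K2 * (E1 * E3))) by ring.
  assert (Hq : 0 < (K1 * K2) * (K1 * K2)) by (apply Rsqr_pos_lt; intros E; rewrite E in HK; lra).
  assert ((a * K1) * (b * K2) < 0) by nra.
  nra.
Qed.

Definition right_lim (f : R -> R) (a L : R) := limit1_in f (fun s => a < s) L a.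
Definition left_lim (f : R -> R) (b L : R) := limit1_in f (fun s => s < b) L b.

Lemma right_lim_close f a L : right_lim f a L ->
  forall eps, 0 < eps -> exists del, 0 < del /\
    forall s, a < s < a + del -> Rabs (f s - L) < eps.
Proof.
  intros H eps He. destruct (H eps He) as [d [Hd K]]. exists d. split; [lra|].
  intros s Hs. apply (K s). split; [lra|]. simpl. unfold R_dist. rewrite Rabs_right; lra.
Qed.

Lemma left_lim_close f b L : left_lim f b L ->
  forall eps, 0 < eps -> exists del, 0 < del /\
    forall s, b - del < s < b -> Rabs (f s - L) < eps.
Proof.
  intros H eps He. destruct (H eps He) as [d [Hd K]]. exists d. split; [lra|].
  intros s Hs. apply (K s). split; [lra|]. simpl. unfold R_dist. rewrite Rabs_left; lra.
Qed.

Lemma right_lim_le f a y c L : a < y ->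
  (forall s, a < s < y -> f s <= c) -> right_lim f a L -> L <= c.
Proof.
  intros Hay Hf Hl. destruct (Rle_or_lt L c) as [|Hlt]; [assumption|exfalso].
  destruct (right_lim_close f a L Hl (L - c)) as [d [Hd K]]; [lra|].
  set (s := a + Rmin d (y - a) / 2).
  assert (Hm := Rmin_l d (y - a)). assert (Hm' := Rmin_r d (y - a)).
  assert (0 < Rmin d (y - a)) by (apply Rmin_pos; lra).
  assert (Ks := K s ltac:(unfold s; lra)). apply Rabs_def2 in Ks.
  assert (f s <= c) by (apply Hf; unfold s; lra). lra.
Qed.

Lemma left_lim_ge f b y c L : y < b ->
  (forall s, y < s < b -> c <= f s) -> left_lim f b L -> c <= L.
Proof.
  intros Hyb Hf Hl. destruct (Rle_or_lt c L) as [|Hlt]; [assumption|exfalso].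
  destruct (left_lim_close f b L Hl (c - L)) as [d [Hd K]]; [lra|].
  set (s := b - Rmin d (b - y) / 2).
  assert (Hm := Rmin_l d (b - y)). assert (Hm' := Rmin_r d (b - y)).
  assert (0 < Rmin d (b - y)) by (apply Rmin_pos; lra).
  assert (Ks := K s ltac:(unfold s; lra)). apply Rabs_def2 in Ks.
  assert (c <= f s) by (apply Hf; unfold s; lra). lra.
Qed.

Lemma right_lim_ext f g a b L : a < b -> (forall s, a < s < b -> f s = g s) ->
  right_lim f a L -> right_lim g a L.
Proof.
  intros Hab E Hf eps He. destruct (Hf eps He) as [d [Hd K]].
  exists (Rmin d (b - a)). split; [apply Rmin_pos; lra|].
  intros s [Hs Hds]. simpl in *. unfold R_dist in *.
  assert (Hm := Rmin_l d (b - a)). assert (Hm' := Rmin_r d (b - a)).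
  rewrite Rabs_right in Hds by lra.
  rewrite <- E by lra. apply K. split; [exact Hs|]. rewrite Rabs_right; lra.
Qed.

Lemma below_left_lim_of_pos_deriv f f' a b L :
  (forall x, a < x < b -> derivable_pt_lim f x (f' x)) ->
  (forall x, a < x < b -> f' x > 0) ->
  left_lim f b L -> forall x, a < x < b -> f x < L.
Proof.
  intros Hd Hp Hl x Hx.
  assert (Hinc := increasing_of_pos_deriv f f' a b Hd Hp).
  set (y := (x + b) / 2).
  assert (f x < f y) by (apply Hinc; unfold y; lra).
  assert (f y <= L); [|lra].
  apply (left_lim_ge f b y); [unfold y; lra | | exact Hl].
  intros s Hs. left. apply Hinc; unfold y in *; lra.
Qed.

Lemma above_right_lim_of_pos_deriv f f' a b L :
  (forall x, a < x < b -> derivable_pt_lim f x (f' x)) ->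
  (forall x, a < x < b -> f' x > 0) ->
  right_lim f a L -> forall x, a < x < b -> L < f x.
Proof.
  intros Hd Hp Hl x Hx.
  assert (Hinc := increasing_of_pos_deriv f f' a b Hd Hp).
  set (y := (a + x) / 2).
  assert (f y < f x) by (apply Hinc; unfold y; lra).
  assert (L <= f y); [|lra].
  apply (right_lim_le f a y); [unfold y; lra | | exact Hl].
  intros s Hs. left. apply Hinc; unfold y in *; lra.
Qed.

Lemma deriv_sign_left_lim f f' a b L :
  (forall x, a < x < b -> derivable_pt_lim f x (f' x)) ->
  (forall x y, a < x < b -> a < y < b -> f' x * f' y > 0) ->
  left_lim f b L -> forall x, a < x < b -> (f x - L) * f' x < 0.
Proof.
  intros Hd Hs Hl x Hx.
  assert (Hx' := Hs x x Hx Hx).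
  destruct (Rlt_or_le 0 (f' x)) as [Pos|Neg].
  - assert (f x < L); [|nra].
    apply (below_left_lim_of_pos_deriv f f' a b L Hd); auto.
    intros y Hy. specialize (Hs x y Hx Hy). nra.
  - assert (- f x < - L); [|nra].
    apply (below_left_lim_of_pos_deriv (fun s => - f s) (fun s => - f' s) a b (- L)); auto.
    + intros y Hy. apply derivable_pt_lim_opp, Hd; exact Hy.
    + intros y Hy. specialize (Hs x y Hx Hy). nra.
    + apply limit_Ropp, Hl.
Qed.

Lemma deriv_sign_right_lim f f' a b L :
  (forall x, a < x < b -> derivable_pt_lim f x (f' x)) ->
  (forall x y, a < x < b -> a < y < b -> f' x * f' y > 0) ->
  right_lim f a L -> forall x, a < x < b -> (f x - L) * f' x > 0.
Proof.
  intros Hd Hs Hl x Hx.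
  assert (Hx' := Hs x x Hx Hx).
  destruct (Rlt_or_le 0 (f' x)) as [Pos|Neg].
  - assert (L < f x); [|nra].
    apply (above_right_lim_of_pos_deriv f f' a b L Hd); auto.
    intros y Hy. specialize (Hs x y Hx Hy). nra.
  - assert (- L < - f x); [|nra].
    apply (above_right_lim_of_pos_deriv (fun s => - f s) (fun s => - f' s) a b (- L)); auto.
    + intros y Hy. apply derivable_pt_lim_opp, Hd; exact Hy.
    + intros y Hy. specialize (Hs x y Hx Hy). nra.
    + apply limit_Ropp, Hl.
Qed.

Lemma right_lim_sign f a y L M : a < y -> right_lim f a L -> L <> 0 ->
  (forall s, a < s < y -> f s * M > 0) -> L * M > 0.
Proof.
  intros Hay Hl HL Hs.
  assert (HM : M <> 0) by (intros ->; specialize (Hs ((a + y) / 2) ltac:(lra)); lra).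
  assert (- L * M <= 0); [|assert (L * M <> 0) by (apply Rmult_integral_contrapositive; auto); lra].
  apply (right_lim_le (fun s => - f s * M) a y); auto.
  - intros s Hs'. specialize (Hs s Hs'). lra.
  - apply limit_mul; [apply limit_Ropp, Hl | exact (limit_free (fun _ => M) _ 0 a)].
Qed.

Lemma sign_near_nonzero f u : continuity_pt f u -> f u <> 0 ->
  exists del, 0 < del /\ forall y, Rabs (y - u) < del -> f y * f u > 0.
Proof.
  intros Hc Hnz.
  destruct (Hc (Rabs (f u)) (Rabs_pos_lt _ Hnz)) as [del [Hdel Hclose]].
  exists del. split; [exact Hdel|]. intros y Hy.
  destruct (Req_dec y u) as [->|Hne]; [nra|].
  assert (K : Rabs (f y - f u) < Rabs (f u)).
  { apply (Hclose y). split; [split; [exact I | auto] | exact Hy]. }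
  apply Rabs_def2 in K.
  destruct (Rle_or_lt 0 (f u)).
  - rewrite Rabs_right in K by lra. nra.
  - rewrite Rabs_left in K by lra. nra.
Qed.

Lemma second_order_sign g g1 g2 u d : 0 < d ->
  (forall x, Rabs (x - u) < d ->
     derivable_pt_lim g x (g1 x) /\ derivable_pt_lim g1 x (g2 x)) ->
  g u = 0 -> g1 u = 0 -> continuity_pt g2 u -> g2 u <> 0 ->
  exists e, 0 < e < d /\ g (u - e) * g2 u > 0 /\ g (u + e) * g2 u > 0.
Proof.
  intros Hd Hder Hg Hg1 Hc Hnz.
  destruct (sign_near_nonzero g2 u Hc Hnz) as [del [Hdel Hsign]].
  set (e := Rmin del d / 2).
  assert (He : 0 < Rmin del d) by (apply Rmin_pos; lra).
  assert (Hm := Rmin_l del d). assert (Hm' := Rmin_r del d).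
  assert (Hnear : forall x, u - e <= x <= u + e ->
            derivable_pt_lim g x (g1 x) /\ derivable_pt_lim g1 x (g2 x) /\
            (Rabs (x - u) < del -> g2 x * g2 u > 0)).
  { intros x Hx. assert (Rabs (x - u) < d) by (apply Rabs_def1; unfold e in *; lra).
    split; [apply Hder; auto | split; [apply Hder; auto | apply Hsign]]. }
  exists e. split; [unfold e; lra | split].
  - destruct (MVT_cor2 g g1 (u - e) u) as [c [Ec Hc']]; [unfold e; lra | |].
    { intros c Hc'. apply Hnear; lra. }
    destruct (MVT_cor2 g1 g2 c u) as [c2 [Ec2 Hc2]]; [lra | |].
    { intros c2' Hc2'. apply Hnear; lra. }
    assert (K : g2 c2 * g2 u > 0) by (apply Hnear; [lra | apply Rabs_def1; unfold e in *; lra]).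
    assert (Eg : g (u - e) = g2 c2 * (u - c) * e) by (rewrite Hg1 in Ec2; rewrite Hg in Ec; nra).
    rewrite Eg.
    replace (g2 c2 * (u - c) * e * g2 u) with ((g2 c2 * g2 u) * ((u - c) * e)) by ring.
    apply Rmult_gt_0_compat; [exact K | apply Rmult_gt_0_compat; lra].
  - destruct (MVT_cor2 g g1 u (u + e)) as [c [Ec Hc']]; [unfold e; lra | |].
    { intros c Hc'. apply Hnear; lra. }
    destruct (MVT_cor2 g1 g2 u c) as [c2 [Ec2 Hc2]]; [lra | |].
    { intros c2' Hc2'. apply Hnear; lra. }
    assert (K : g2 c2 * g2 u > 0) by (apply Hnear; [lra | apply Rabs_def1; unfold e in *; lra]).
    assert (Eg : g (u + e) = g2 c2 * (c - u) * e) by (rewrite Hg1 in Ec2; rewrite Hg in Ec; nra).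
    rewrite Eg.
    replace (g2 c2 * (c - u) * e * g2 u) with ((g2 c2 * g2 u) * ((c - u) * e)) by ring.
    apply Rmult_gt_0_compat; [exact K | apply Rmult_gt_0_compat; lra].
Qed.

Ltac vsimpl := unfold det3, dot, cross, vsub, vadd, vscale, v0 in *; simpl in *.
Ltac vring := vsimpl; ring.

Lemma V3_ext a b : vx a = vx b -> vy a = vy b -> vz a = vz b -> a = b.
Proof. destruct a, b; simpl; intros; subst; reflexivity. Qed.

Lemma dot_self_nonneg u : 0 <= dot u u.
Proof. destruct u; unfold dot; simpl; nra. Qed.

Lemma dot_self_pos u : u <> v0 -> 0 < dot u u.
Proof.
  intros Hu. pose proof (dot_self_nonneg u) as H. destruct H as [|H]; [assumption|].
  exfalso. apply Hu. destruct u as [a b c]; unfold dot in H; simpl in H.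
  apply V3_ext; simpl; nra.
Qed.

Lemma vnorm_pos u : u <> v0 -> 0 < vnorm u.
Proof. intros Hu. apply sqrt_lt_R0, dot_self_pos, Hu. Qed.

Lemma vnorm_scale k u : vnorm (vscale k u) = Rabs k * vnorm u.
Proof.
  unfold vnorm. replace (dot (vscale k u) (vscale k u)) with ((k * k) * dot u u) by vring.
  rewrite sqrt_mult_alt by nra. f_equal. apply sqrt_Rsqr_abs.
Qed.

Lemma component_le_vnorm u :
  Rabs (vx u) <= vnorm u /\ Rabs (vy u) <= vnorm u /\ Rabs (vz u) <= vnorm u.
Proof.
  destruct u as [a b c]; unfold vnorm, dot; simpl.
  repeat split; rewrite <- sqrt_Rsqr_abs; apply sqrt_le_1_alt; unfold Rsqr; nra.
Qed.

Lemma vnorm_le_components u : vnorm u <= Rabs (vx u) + Rabs (vy u) + Rabs (vz u).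
Proof.
  destruct u as [a b c]; unfold vnorm, dot; simpl.
  pose proof (Rabs_pos a); pose proof (Rabs_pos b); pose proof (Rabs_pos c).
  rewrite <- (sqrt_Rsqr (Rabs a + Rabs b + Rabs c)) by lra.
  apply sqrt_le_1_alt. unfold Rsqr.
  assert (Rabs a * Rabs a = a * a) by (rewrite <- Rabs_mult; apply Rabs_right; nra).
  assert (Rabs b * Rabs b = b * b) by (rewrite <- Rabs_mult; apply Rabs_right; nra).
  assert (Rabs c * Rabs c = c * c) by (rewrite <- Rabs_mult; apply Rabs_right; nra).
  nra.
Qed.

Definition unit (u : V3) : V3 := vscale (/ vnorm u) u.

Lemma dot_unit_r x u : dot x (unit u) = / vnorm u * dot x u.
Proof. unfold unit. vring. Qed.

Lemma dot_unit_l u x : dot (unit u) x = / vnorm u * dot u x.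
Proof. unfold unit. vring. Qed.

Lemma inv_vnorm_pos u : u <> v0 -> 0 < / vnorm u.
Proof. intros Hu. apply Rinv_0_lt_compat, vnorm_pos, Hu. Qed.

Definition vcont (f : R -> V3) (x : R) : Prop :=
  continuity_pt (fun t => vx (f t)) x /\ continuity_pt (fun t => vy (f t)) x /\
  continuity_pt (fun t => vz (f t)) x.

Definition vder (f : R -> V3) (x : R) (d : V3) : Prop :=
  derivable_pt_lim (fun t => vx (f t)) x (vx d) /\
  derivable_pt_lim (fun t => vy (f t)) x (vy d) /\
  derivable_pt_lim (fun t => vz (f t)) x (vz d).

Lemma cont_of_deriv f x l : derivable_pt_lim f x l -> continuity_pt f x.
Proof. intros H. apply derivable_continuous_pt. exists l. exact H. Qed.

Lemma vcont_of_vder f x d : vder f x d -> vcont f x.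
Proof. intros [A [B C]]; repeat split; eapply cont_of_deriv; eauto. Qed.

Lemma vcont_const c x : vcont (fun _ => c) x.
Proof. repeat split; apply (continuity_pt_const (fun _ => _)); intros ? ?; reflexivity. Qed.

Lemma vcont_sub f g x : vcont f x -> vcont g x -> vcont (fun t => vsub (f t) (g t)) x.
Proof.
  intros [A1 [A2 A3]] [B1 [B2 B3]].
  repeat split; apply (continuity_pt_minus (fun t => _ (f t)) (fun t => _ (g t))); auto.
Qed.

Lemma cont_dot f g x : vcont f x -> vcont g x -> continuity_pt (fun t => dot (f t) (g t)) x.
Proof.
  intros [A1 [A2 A3]] [B1 [B2 B3]]. unfold dot.
  repeat (apply (continuity_pt_plus (fun t => _) (fun t => _))
          || apply (continuity_pt_mult (fun t => _ (f t)) (fun t => _ (g t)))); auto.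
Qed.

Lemma vcont_cross f g x : vcont f x -> vcont g x -> vcont (fun t => cross (f t) (g t)) x.
Proof.
  intros [A1 [A2 A3]] [B1 [B2 B3]]. unfold cross; simpl.
  repeat split; apply (continuity_pt_minus (fun t => _) (fun t => _));
    apply (continuity_pt_mult (fun t => _ (f t)) (fun t => _ (g t))); auto.
Qed.

Lemma cont_vnorm f x : vcont f x -> continuity_pt (fun t => vnorm (f t)) x.
Proof.
  intros H. apply (continuity_pt_comp (fun t => dot (f t) (f t)) sqrt).
  - apply cont_dot; exact H.
  - apply continuity_pt_sqrt, dot_self_nonneg.
Qed.

Lemma vcont_unit f x : vcont f x -> f x <> v0 -> vcont (fun t => unit (f t)) x.
Proof.
  intros H Hnz.
  assert (K : continuity_pt (fun t => / vnorm (f t)) x).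
  { apply (continuity_pt_inv (fun t => vnorm (f t))); [apply cont_vnorm, H|].
    apply Rgt_not_eq, vnorm_pos, Hnz. }
  destruct H as [A1 [A2 A3]]. unfold unit, vscale; simpl.
  repeat split; apply (continuity_pt_mult (fun t => / vnorm (f t)) (fun t => _ (f t))); auto.
Qed.

Lemma vder_const c x : vder (fun _ => c) x v0.
Proof. repeat split; apply derivable_pt_lim_const. Qed.

Lemma vder_sub f g x f' g' : vder f x f' -> vder g x g' ->
  vder (fun t => vsub (f t) (g t)) x (vsub f' g').
Proof.
  intros [A1 [A2 A3]] [B1 [B2 B3]].
  repeat split; apply (derivable_pt_lim_minus (fun t => _ (f t)) (fun t => _ (g t))); auto.
Qed.

Lemma derivable_pt_lim_eq f x a b : derivable_pt_lim f x a -> a = b -> derivable_pt_lim f x b.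
Proof. intros H <-; exact H. Qed.

Lemma vder_dot f g x f' g' : vder f x f' -> vder g x g' ->
  derivable_pt_lim (fun t => dot (f t) (g t)) x (dot f' (g x) + dot (f x) g').
Proof.
  intros [A1 [A2 A3]] [B1 [B2 B3]]. unfold dot.
  eapply derivable_pt_lim_eq.
  - repeat (apply (derivable_pt_lim_plus (fun t => _) (fun t => _))
            || apply (derivable_pt_lim_mult (fun t => _ (f t)) (fun t => _ (g t)))); eauto.
  - simpl. ring.
Qed.

Lemma vder_cross f g x f' g' : vder f x f' -> vder g x g' ->
  vder (fun t => cross (f t) (g t)) x (vadd (cross f' (g x)) (cross (f x) g')).
Proof.
  intros [A1 [A2 A3]] [B1 [B2 B3]]. unfold cross, vadd; simpl.
  repeat split; (eapply derivable_pt_lim_eq;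
    [ apply (derivable_pt_lim_minus (fun t => _) (fun t => _));
      apply (derivable_pt_lim_mult (fun t => _ (f t)) (fun t => _ (g t))); eauto
    | simpl; ring ]).
Qed.

Lemma cont_close f x eps : continuity_pt f x -> 0 < eps ->
  exists d, 0 < d /\ forall t, Rabs (t - x) < d -> Rabs (f t - f x) < eps.
Proof.
  intros H He. destruct (H eps He) as [d [Hd Hd2]]. exists d. split; [exact Hd|].
  intros t Ht. destruct (Req_dec t x) as [->|E].
  - rewrite Rminus_diag, Rabs_R0. exact He.
  - apply (Hd2 t). split; [split; [exact I | auto] | exact Ht].
Qed.

Lemma vcont_close f x eps : vcont f x -> 0 < eps ->
  exists d, 0 < d /\ forall t, Rabs (t - x) < d -> vnorm (vsub (f t) (f x)) < eps.
Proof.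
  intros [A [B C]] He.
  destruct (cont_close _ _ (eps/3) A) as [d1 [H1 K1]]; [lra|].
  destruct (cont_close _ _ (eps/3) B) as [d2 [H2 K2]]; [lra|].
  destruct (cont_close _ _ (eps/3) C) as [d3 [H3 K3]]; [lra|].
  exists (Rmin d1 (Rmin d2 d3)). split; [repeat apply Rmin_pos; auto|].
  intros t Ht.
  pose proof (Rmin_l d1 (Rmin d2 d3)). pose proof (Rmin_r d1 (Rmin d2 d3)).
  pose proof (Rmin_l d2 d3). pose proof (Rmin_r d2 d3).
  eapply Rle_lt_trans; [apply vnorm_le_components|]. simpl.
  assert (Rabs (vx (f t) - vx (f x)) < eps/3) by (apply K1; lra).
  assert (Rabs (vy (f t) - vy (f x)) < eps/3) by (apply K2; lra).
  assert (Rabs (vz (f t) - vz (f x)) < eps/3) by (apply K3; lra).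
  lra.
Qed.

Lemma rlim_of_vcont f x : vcont f x -> rlim f x (f x).
Proof.
  intros H eps He. destruct (vcont_close f x eps H He) as [d [Hd K]].
  exists d. split; [exact Hd|]. intros t Ht. apply K. rewrite Rabs_right; lra.
Qed.

Lemma llim_of_vcont f x : vcont f x -> llim f x (f x).
Proof.
  intros H eps He. destruct (vcont_close f x eps H He) as [d [Hd K]].
  exists d. split; [exact Hd|]. intros t Ht. apply K. rewrite Rabs_left; lra.
Qed.

Lemma eq_of_close x y : (forall eps, 0 < eps -> Rabs (x - y) < eps) -> x = y.
Proof.
  intros H. destruct (Req_dec x y) as [E|E]; [exact E|exfalso].
  assert (Hp : 0 < Rabs (x - y)) by (apply Rabs_pos_lt; lra).
  specialize (H _ Hp). lra.
Qed.

Lemma llim_unique f s a b : llim f s a -> llim f s b -> a = b.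
Proof.
  intros Ha Hb.
  assert (Close : forall eps, 0 < eps ->
    Rabs (vx a - vx b) < eps /\ Rabs (vy a - vy b) < eps /\ Rabs (vz a - vz b) < eps).
  { intros eps He.
    destruct (Ha (eps/2)) as [d1 [H1 K1]]; [lra|].
    destruct (Hb (eps/2)) as [d2 [H2 K2]]; [lra|].
    set (t := s - Rmin d1 d2 / 2).
    pose proof (Rmin_l d1 d2). pose proof (Rmin_r d1 d2).
    assert (0 < Rmin d1 d2) by (apply Rmin_pos; auto).
    assert (A1 : vnorm (vsub (f t) a) < eps/2) by (apply K1; unfold t; lra).
    assert (A2 : vnorm (vsub (f t) b) < eps/2) by (apply K2; unfold t; lra).
    pose proof (component_le_vnorm (vsub (f t) a)) as [X1 [Y1 Z1]].
    pose proof (component_le_vnorm (vsub (f t) b)) as [X2 [Y2 Z2]].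
    assert (T : forall p q u, Rabs (u - p) < eps/2 -> Rabs (u - q) < eps/2 -> Rabs (p - q) < eps).
    { intros p q u P Q. replace (p - q) with ((u - q) - (u - p)) by ring.
      eapply Rle_lt_trans; [apply Rabs_triang|]. rewrite Rabs_Ropp. lra. }
    simpl in *. repeat split; eapply T; eapply Rle_lt_trans; eauto. }
  apply V3_ext; apply eq_of_close; intros eps He; apply Close; exact He.
Qed.

Lemma right_lim_of_cont f a : continuity_pt f a -> right_lim f a (f a).
Proof.
  intros H eps He. destruct (cont_close f a eps H He) as [d [Hd K]].
  exists d. split; [lra|]. intros s [_ Hs]. apply K. exact Hs.
Qed.

Lemma left_lim_of_cont f b : continuity_pt f b -> left_lim f b (f b).
Proof.
  intros H eps He. destruct (cont_close f b eps H He) as [d [Hd K]].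
  exists d. split; [lra|]. intros s [_ Hs]. apply K. exact Hs.
Qed.

Lemma right_lim_div f g a F G : right_lim f a F -> right_lim g a G -> G <> 0 ->
  right_lim (fun s => f s / g s) a (F / G).
Proof. intros Hf Hg HG. unfold right_lim, Rdiv in *. apply limit_mul; [|apply limit_inv]; auto. Qed.

Definition vright_lim (f : R -> V3) (a : R) (L : V3) : Prop :=
  right_lim (fun s => vx (f s)) a (vx L) /\ right_lim (fun s => vy (f s)) a (vy L) /\
  right_lim (fun s => vz (f s)) a (vz L).

Lemma vright_lim_of_rlim f a L : rlim f a L -> vright_lim f a L.
Proof.
  intros H. repeat split; intros eps He; destruct (H eps He) as [d [Hd K]];
    exists d; (split; [lra|]); intros s [Hs1 Hs2]; simpl in *; unfold R_dist in *;
    rewrite Rabs_right in Hs2 by lra;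
    (eapply Rle_lt_trans; [|apply (K s); lra]);
    pose proof (component_le_vnorm (vsub (f s) L)) as [X [Y Z]]; simpl in X, Y, Z; assumption.
Qed.

Lemma vright_lim_of_vcont f a : vcont f a -> vright_lim f a (f a).
Proof. intros [A [B C]]. repeat split; apply right_lim_of_cont; assumption. Qed.

Lemma right_lim_dot f g a F G : vright_lim f a F -> vright_lim g a G ->
  right_lim (fun s => dot (f s) (g s)) a (dot F G).
Proof.
  intros [A1 [A2 A3]] [B1 [B2 B3]]. unfold dot, right_lim in *.
  repeat apply limit_plus; apply limit_mul; assumption.
Qed.

Lemma cross_zero_of_coplanar u d x g0 g1 :
  det3 u d x = 0 -> dot d g0 = 0 -> dot d g1 = 0 ->
  dot u g0 * dot x g1 - dot u g1 * dot x g0 <> 0 -> cross d x = v0.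
Proof.
  intros Hdet H0 H1 Hnd.
  set (Dl := dot u g0 * dot x g1 - dot u g1 * dot x g0) in *.
  (* Each coordinate of [d x x] times [Dl] is a combination of [det3 u d x], [d.g0]
     and [d.g1], all of which vanish. *)
  assert (Elim : forall (k : V3 -> R),
    k (cross d x) * Dl = (det3 u d x * k g0 - k (cross x u) * dot d g0) * dot x g1
                         - (det3 u d x * k g1 - k (cross x u) * dot d g1) * dot x g0 ->
    k (cross d x) = 0).
  { intros k Ek. rewrite Hdet, H0, H1 in Ek. ring_simplify in Ek.
    apply Rmult_integral in Ek. destruct Ek as [Ek|Ek]; [exact Ek | contradiction]. }
  apply V3_ext; [apply (Elim vx) | apply (Elim vy) | apply (Elim vz)]; unfold Dl; vring.
Qed.

Lemma zero_of_parallel d x g : cross d x = v0 -> dot d g = 0 -> dot x g <> 0 -> d = v0.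
Proof.
  intros Hc Hd Hx.
  (* Coordinatewise: [(x.g) d = (d.g) x - (d x x) x g]. *)
  assert (Elim : forall (k : V3 -> R),
    k d * dot x g = k x * dot d g - k (cross (cross d x) g) -> k (cross v0 g) = 0 -> k d = 0).
  { intros k Ek Hk. rewrite Hc, Hd, Hk in Ek.
    assert (Ek' : k d * dot x g = 0) by lra.
    apply Rmult_integral in Ek'. destruct Ek' as [Ek'|Ek']; [exact Ek' | contradiction]. }
  apply V3_ext; [apply (Elim vx) | apply (Elim vy) | apply (Elim vz)]; vring.
Qed.

Lemma peval_padd p q x : peval (padd p q) x = peval p x + peval q x.
Proof.
  revert q; induction p as [|a p IH]; intros q; simpl; [lra|].
  destruct q as [|b q]; simpl; [lra|]. rewrite IH. ring.
Qed.

Lemma peval_pscale k p x : peval (pscale k p) x = k * peval p x.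
Proof. induction p as [|a p IH]; simpl; [ring|]. rewrite IH. ring. Qed.

Lemma peval_pmul p q x : peval (pmul p q) x = peval p x * peval q x.
Proof.
  induction p as [|a p IH]; simpl; [ring|].
  rewrite peval_padd, peval_pscale. simpl. rewrite IH. ring.
Qed.

Lemma peval_psub p q x : peval (psub p q) x = peval p x - peval q x.
Proof. unfold psub. rewrite peval_padd, peval_pscale. ring. Qed.

Lemma peval_pderiv_aux q k x :
  peval (pderiv_aux k q) x = INR k * peval q x + x * peval (pderiv q) x.
Proof.
  revert k; induction q as [|b q IH]; intros k; simpl; [ring|].
  change (peval (pderiv (b :: q)) x) with (peval (pderiv_aux 1 q) x).
  rewrite !IH, S_INR. simpl INR. ring.
Qed.

Lemma peval_derivable q x : derivable_pt_lim (fun y => peval q y) x (peval (pderiv q) x).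
Proof.
  induction q as [|a q IH]; simpl.
  - apply derivable_pt_lim_const.
  - change (peval (pderiv (a :: q)) x) with (peval (pderiv_aux 1 q) x).
    rewrite peval_pderiv_aux. simpl INR.
    replace (1 * peval q x + x * peval (pderiv q) x) with
      (0 + (1 * peval q x + x * peval (pderiv q) x)) by ring.
    apply (derivable_pt_lim_plus (fun _ => a) (fun y => y * peval q y)).
    + apply derivable_pt_lim_const.
    + apply (derivable_pt_lim_mult id (fun y => peval q y)); [apply derivable_pt_lim_id | exact IH].
Qed.

Lemma rf_deriv_correct f x : peval (snd f) x <> 0 ->
  derivable_pt_lim (rf_eval f) x (rf_eval (rf_deriv f) x).
Proof.
  intros H. unfold rf_eval, rf_deriv; simpl.
  rewrite peval_psub, !peval_pmul.
  pose proof (derivable_pt_lim_div _ _ x _ _ (peval_derivable (fst f) x)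
                (peval_derivable (snd f) x) H) as D.
  unfold div_fct, Rsqr in D.
  eapply derivable_pt_lim_eq; [exact D|]. f_equal. ring.
Qed.

Lemma defined_rD (r : curve) t : defined_at r t -> defined_at (rD r) t.
Proof.
  unfold defined_at, rD, cmap, rf_deriv; simpl. rewrite !peval_pmul.
  intros [A [B C]]; repeat split; apply Rmult_integral_contrapositive; tauto.
Qed.

Lemma pos_vder (r : curve) t : defined_at r t -> vder (pos r) t (pos (rD r) t).
Proof.
  intros [A [B C]]. unfold vder, pos, rD, cmap; simpl.
  repeat split; apply rf_deriv_correct; assumption.
Qed.

Definition osc_normal (v w : R -> V3) (t : R) : V3 := cross (v t) (w t).

Definition unit_tangent (v : R -> V3) (t : R) : V3 := unit (v t).

Definition unit_binormal (v w : R -> V3) (t : R) : V3 := unit (osc_normal v w t).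

Record regular_arc (p v w z : R -> V3) (t0 t1 : R) : Prop := {
  arc_lt : t0 < t1;
  arc_dp : forall t, t0 <= t <= t1 -> vder p t (v t);
  arc_dv : forall t, t0 <= t <= t1 -> vder v t (w t);
  arc_dw : forall t, t0 <= t <= t1 -> vder w t (z t);
  arc_cz : forall t, t0 <= t <= t1 -> vcont z t;
  arc_v : forall t, t0 < t <= t1 -> v t <> v0;
  arc_normal : forall t, t0 < t <= t1 -> osc_normal v w t <> v0;
  arc_torsion : forall t, t0 < t <= t1 -> det3 (v t) (w t) (z t) <> 0 }.

Record admissible_frame (p A G : R -> V3) (t0 t1 : R) : Prop := {
  adm_I1 : forall s1 s2 a g, t0 <= s1 < s2 -> s2 <= t1 ->
     rlim A s1 a -> llim G s2 g -> dot a g <> 0;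
  adm_I2 : forall s1 s2 a g, t0 <= s1 < s2 -> s2 <= t1 ->
     llim A s2 a -> rlim G s1 g -> dot a g <> 0;
  adm_II : forall s1 s2 a1 a2, t0 <= s1 < s2 -> s2 <= t1 ->
     rlim A s1 a1 -> llim A s2 a2 -> dot (cross a1 (vsub (p s2) (p s1))) a2 <> 0;
  adm_III1 : forall s1 s2 g, t0 <= s1 < s2 -> s2 <= t1 ->
     llim G s2 g -> dot (vsub (p s1) (p s2)) g <> 0;
  adm_III2 : forall s1 s2 g, t0 <= s1 < s2 -> s2 <= t1 ->
     rlim G s1 g -> dot (vsub (p s2) (p s1)) g <> 0 }.

Arguments arc_lt {p v w z t0 t1}.
Arguments arc_dp {p v w z t0 t1}.
Arguments arc_dv {p v w z t0 t1}.
Arguments arc_dw {p v w z t0 t1}.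
Arguments arc_cz {p v w z t0 t1}.
Arguments arc_v {p v w z t0 t1}.
Arguments arc_normal {p v w z t0 t1}.
Arguments arc_torsion {p v w z t0 t1}.
Arguments adm_I1 {p A G t0 t1}.
Arguments adm_I2 {p A G t0 t1}.
Arguments adm_II {p A G t0 t1}.
Arguments adm_III1 {p A G t0 t1}.
Arguments adm_III2 {p A G t0 t1}.

(* A dot product with a normalised vector vanishes exactly when the unnormalised one
   does; this converts conditions on [alpha], [gamma] into conditions on [v], [v x w]. *)
Lemma dot_unit_r_nonzero x u : dot x (unit u) <> 0 -> dot x u <> 0.
Proof. rewrite dot_unit_r. intros H E. apply H. rewrite E. ring. Qed.

Lemma dot_unit_l_nonzero u x : dot (unit u) x <> 0 -> dot u x <> 0.
Proof. rewrite dot_unit_l. intros H E. apply H. rewrite E. ring. Qed.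

Section Arc.
Variables p v w z : R -> V3.
Variables t0 t1 : R.
Hypothesis arc : regular_arc p v w z t0 t1.

Lemma arc_cont_p t : t0 <= t <= t1 -> vcont p t.
Proof. intros Ht. exact (vcont_of_vder _ _ _ (arc_dp arc t Ht)). Qed.

Lemma arc_cont_v t : t0 <= t <= t1 -> vcont v t.
Proof. intros Ht. exact (vcont_of_vder _ _ _ (arc_dv arc t Ht)). Qed.

Lemma arc_cont_normal t : t0 <= t <= t1 -> vcont (osc_normal v w) t.
Proof.
  intros Ht. apply vcont_cross; [apply arc_cont_v, Ht|].
  exact (vcont_of_vder _ _ _ (arc_dw arc t Ht)).
Qed.

Lemma arc_cont_unit_tangent t : t0 < t <= t1 -> vcont (unit_tangent v) t.
Proof. intros Ht. apply vcont_unit; [apply arc_cont_v; lra | exact (arc_v arc t Ht)]. Qed.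

Lemma arc_cont_unit_binormal t : t0 < t <= t1 -> vcont (unit_binormal v w) t.
Proof. intros Ht. apply vcont_unit; [apply arc_cont_normal; lra | exact (arc_normal arc t Ht)]. Qed.

(* The point [P + osc_param P e s * e] of the line through [P] with direction [e] lies
   in the osculating plane at parameter [s]. *)
Definition osc_param (P e : V3) (s : R) : R :=
  dot (vsub (p s) P) (osc_normal v w s) / dot e (osc_normal v w s).

Definition osc_param_rate (P e : V3) (s : R) : R :=
  - det3 (v s) (w s) (z s) * det3 (vsub (p s) P) e (v s).

(* Derivative of [osc_param]; the numerator simplifies because [v] and [w] are orthogonal
   to [v x w], and the identity between the two sides is a polynomial identity. *)
Lemma osc_param_deriv P e t : t0 <= t <= t1 -> dot e (osc_normal v w t) <> 0 ->
  derivable_pt_lim (osc_param P e) t (osc_param_rate P e t / Rsqr (dot e (osc_normal v w t))).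
Proof.
  intros Ht He.
  assert (Dn := vder_cross v w t (w t) (z t) (arc_dv arc t Ht) (arc_dw arc t Ht)).
  assert (Dnum := vder_dot (fun s => vsub (p s) P) (osc_normal v w) t _ _
                    (vder_sub p (fun _ => P) t _ _ (arc_dp arc t Ht) (vder_const P t)) Dn).
  assert (Dden := vder_dot (fun _ => e) (osc_normal v w) t _ _ (vder_const e t) Dn).
  eapply derivable_pt_lim_eq; [exact (derivable_pt_lim_div _ _ t _ _ Dnum Dden He)|].
  unfold osc_param_rate, osc_normal, Rdiv. f_equal.
  generalize (v t) (w t) (z t) (p t). intros [] [] [] []. destruct P, e. vring.
Qed.

Lemma osc_param_cont P e t : t0 <= t <= t1 -> dot e (osc_normal v w t) <> 0 ->
  continuity_pt (osc_param P e) t.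
Proof. intros Ht He. eapply cont_of_deriv, osc_param_deriv; eassumption. Qed.

Section Edge.
Variables P e : V3.
Hypothesis edge_transversal : forall s, t0 < s < t1 -> dot e (osc_normal v w s) <> 0.
Hypothesis edge_skew : forall s, t0 < s < t1 -> det3 (vsub (p s) P) e (v s) <> 0.

(* The rate has constant sign, since the torsion determinant does not vanish either. *)
Lemma osc_param_rate_sign x y : t0 < x < t1 -> t0 < y < t1 ->
  osc_param_rate P e x * osc_param_rate P e y > 0.
Proof.
  intros Hx Hy. unfold osc_param_rate.
  assert (Ht := sign_persists_open (fun s => det3 (v s) (w s) (z s)) t0 t1 x y Hx Hy).
  assert (Hs := sign_persists_open (fun s => det3 (vsub (p s) P) e (v s)) t0 t1 x y Hx Hy).
  simpl in Ht, Hs.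
  assert (T : det3 (v x) (w x) (z x) * det3 (v y) (w y) (z y) > 0).
  { apply Ht; intros s Hs'.
    - apply cont_dot; [apply arc_cont_v; lra|].
      apply vcont_cross; [exact (vcont_of_vder _ _ _ (arc_dw arc s ltac:(lra))) | apply (arc_cz arc); lra].
    - apply (arc_torsion arc); lra. }
  assert (S : det3 (vsub (p x) P) e (v x) * det3 (vsub (p y) P) e (v y) > 0).
  { apply Hs; intros s Hs'; [|apply edge_skew; exact Hs'].
    apply cont_dot; [apply vcont_sub; [apply arc_cont_p; lra | apply vcont_const]|].
    apply vcont_cross; [apply vcont_const | apply arc_cont_v; lra]. }
  nra.
Qed.

Lemma inv_sqr_transversal_pos x : t0 < x < t1 -> 0 < / Rsqr (dot e (osc_normal v w x)).
Proof. intros Hx. apply Rinv_0_lt_compat, Rsqr_pos_lt, edge_transversal, Hx. Qed.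

Lemma osc_param_deriv_sign x y : t0 < x < t1 -> t0 < y < t1 ->
  osc_param_rate P e x / Rsqr (dot e (osc_normal v w x)) *
  (osc_param_rate P e y / Rsqr (dot e (osc_normal v w y))) > 0.
Proof.
  intros Hx Hy.
  assert (Ex := inv_sqr_transversal_pos x Hx). assert (Ey := inv_sqr_transversal_pos y Hy).
  assert (K := osc_param_rate_sign x y Hx Hy). unfold Rdiv.
  replace (osc_param_rate P e x * / (dot e (osc_normal v w x))² *
    (osc_param_rate P e y * / (dot e (osc_normal v w y))²)) with
    ((osc_param_rate P e x * osc_param_rate P e y) *
     (/ (dot e (osc_normal v w x))² * / (dot e (osc_normal v w y))²)) by ring.
  apply Rmult_gt_0_compat; [exact K | apply Rmult_gt_0_compat; assumption].
Qed.

Lemma osc_param_deriv_open t : t0 < t < t1 ->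
  derivable_pt_lim (osc_param P e) t (osc_param_rate P e t / Rsqr (dot e (osc_normal v w t))).
Proof. intros Ht. apply osc_param_deriv; [lra | apply edge_transversal, Ht]. Qed.

Lemma osc_param_monotone : strictly_monotone_on t0 t1 (osc_param P e).
Proof. exact (strictly_monotone_of_deriv _ _ t0 t1 osc_param_deriv_open osc_param_deriv_sign). Qed.

Lemma osc_param_left_lim_sign L : left_lim (osc_param P e) t1 L ->
  forall x, t0 < x < t1 -> (osc_param P e x - L) * osc_param_rate P e x < 0.
Proof.
  intros Hl x Hx.
  assert (K := deriv_sign_left_lim _ _ t0 t1 L osc_param_deriv_open osc_param_deriv_sign Hl x Hx).
  assert (Pos := inv_sqr_transversal_pos x Hx). unfold Rdiv in K. nra.
Qed.

Lemma osc_param_right_lim_sign L : right_lim (osc_param P e) t0 L ->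
  forall x, t0 < x < t1 -> (osc_param P e x - L) * osc_param_rate P e x > 0.
Proof.
  intros Hl x Hx.
  assert (K := deriv_sign_right_lim _ _ t0 t1 L osc_param_deriv_open osc_param_deriv_sign Hl x Hx).
  assert (Pos := inv_sqr_transversal_pos x Hx). unfold Rdiv in K. nra.
Qed.

End Edge.

Definition osc_meet (P Q : V3) (t : R) : V3 :=
  vadd P (vscale (osc_param P (vsub Q P) t) (vsub Q P)).

Lemma line_point_offset P Q n X mu :
  dot (vsub (vadd P (vscale mu (vsub Q P))) X) n = mu * dot (vsub Q P) n - dot (vsub X P) n.
Proof. vring. Qed.

Definition osc_unique_meet (t : R) (P Q X : V3) : Prop :=
  on_line P Q X /\ on_plane (p t) (unit_binormal v w t) X /\
  forall Y, on_line P Q Y -> on_plane (p t) (unit_binormal v w t) Y -> Y = X.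

Lemma osc_meet_unique P Q t : t0 < t <= t1 -> dot (vsub Q P) (osc_normal v w t) <> 0 ->
  osc_unique_meet t P Q (osc_meet P Q t).
Proof.
  intros Ht HE.
  assert (Hk : 0 < vnorm (osc_normal v w t)) by (apply vnorm_pos, (arc_normal arc); exact Ht).
  split; [|split].
  - exists (osc_param P (vsub Q P) t). reflexivity.
  - unfold on_plane, osc_meet, unit_binormal. rewrite dot_unit_r, line_point_offset.
    unfold osc_param. field. split; [exact HE | lra].
  - intros Y [mu ->] HY. unfold on_plane, unit_binormal in HY.
    rewrite dot_unit_r, line_point_offset in HY.
    assert (Hmu : mu * dot (vsub Q P) (osc_normal v w t) = dot (vsub (p t) P) (osc_normal v w t)).
    { assert (0 < / vnorm (osc_normal v w t)) by (apply Rinv_0_lt_compat, Hk).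
      apply Rmult_integral in HY. destruct HY as [HY|HY]; lra. }
    unfold osc_meet, osc_param. f_equal. f_equal.
    apply (Rmult_eq_reg_r (dot (vsub Q P) (osc_normal v w t))); [|exact HE].
    rewrite Hmu. field. exact HE.
Qed.

Lemma osc_meet_dist P Q t :
  vnorm (vsub (osc_meet P Q t) P) = Rabs (osc_param P (vsub Q P) t) * vnorm (vsub Q P).
Proof.
  unfold osc_meet. rewrite <- vnorm_scale. f_equal. apply V3_ext; vsimpl; ring.
Qed.

Lemma osc_meet_dist_monotone P Q :
  (forall s, t0 < s < t1 -> dot (vsub Q P) (osc_normal v w s) <> 0) ->
  (forall s, t0 < s < t1 -> det3 (vsub (p s) P) (vsub Q P) (v s) <> 0) ->
  (forall s, t0 < s < t1 -> osc_param P (vsub Q P) s <> 0) ->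
  strictly_monotone_on t0 t1 (fun t => vnorm (vsub (osc_meet P Q t) P)).
Proof.
  intros HE Hdet Hnz.
  assert (Hlt := arc_lt arc).
  assert (HPQ : 0 < vnorm (vsub Q P)).
  { apply vnorm_pos. intros E. apply (HE ((t0 + t1) / 2)); [lra|]. rewrite E. vring. }
  assert (Hm := abs_scaled_monotone (osc_param P (vsub Q P)) t0 t1 (vnorm (vsub Q P)) HPQ).
  destruct Hm as [Hi|Hd].
  - intros s Hs. apply osc_param_cont; [lra | apply HE, Hs].
  - exact Hnz.
  - exact (osc_param_monotone P (vsub Q P) HE Hdet).
  - left. intros x y Hx Hxy Hy. rewrite !osc_meet_dist. apply Hi; assumption.
  - right. intros x y Hx Hxy Hy. rewrite !osc_meet_dist. apply Hd; assumption.
Qed.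

Section Tetrahedron.
Hypothesis frame : admissible_frame p (unit_tangent v) (unit_binormal v w) t0 t1.
Variables a0 g0 a1 g1 : V3.
Hypothesis Ha0 : rlim (unit_tangent v) t0 a0.
Hypothesis Hg0 : rlim (unit_binormal v w) t0 g0.
Hypothesis Ha1 : llim (unit_tangent v) t1 a1.
Hypothesis Hg1 : llim (unit_binormal v w) t1 g1.

Let Hlt := arc_lt arc.

Lemma tangent_rlim t : t0 < t < t1 -> rlim (unit_tangent v) t (unit_tangent v t).
Proof. intros Ht. apply rlim_of_vcont, arc_cont_unit_tangent; lra. Qed.

Lemma tangent_llim t : t0 < t <= t1 -> llim (unit_tangent v) t (unit_tangent v t).
Proof. intros Ht. apply llim_of_vcont, arc_cont_unit_tangent, Ht. Qed.

Lemma binormal_rlim t : t0 < t < t1 -> rlim (unit_binormal v w) t (unit_binormal v w t).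
Proof. intros Ht. apply rlim_of_vcont, arc_cont_unit_binormal; lra. Qed.

Lemma binormal_llim t : t0 < t <= t1 -> llim (unit_binormal v w) t (unit_binormal v w t).
Proof. intros Ht. apply llim_of_vcont, arc_cont_unit_binormal, Ht. Qed.

Lemma a1_unit_tangent : a1 = unit_tangent v t1.
Proof. apply (llim_unique (unit_tangent v) t1); [exact Ha1 | apply tangent_llim; lra]. Qed.

Lemma g1_unit_binormal : g1 = unit_binormal v w t1.
Proof. apply (llim_unique (unit_binormal v w) t1); [exact Hg1 | apply binormal_llim; lra]. Qed.

Lemma a0_transversal t : t0 < t <= t1 -> dot a0 (osc_normal v w t) <> 0.
Proof.
  intros Ht. apply dot_unit_r_nonzero.
  apply (adm_I1 frame t0 t); [lra | lra | exact Ha0 | apply binormal_llim, Ht].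
Qed.

Lemma a1_transversal t : t0 < t < t1 -> dot a1 (osc_normal v w t) <> 0.
Proof.
  intros Ht. apply dot_unit_r_nonzero.
  apply (adm_I2 frame t t1); [lra | lra | exact Ha1 | apply binormal_rlim, Ht].
Qed.

Lemma a1_g0 : dot a1 g0 <> 0.
Proof. apply (adm_I2 frame t0 t1); [lra | lra | exact Ha1 | exact Hg0]. Qed.

Lemma velocity_g0 t : t0 < t <= t1 -> dot (v t) g0 <> 0.
Proof.
  intros Ht. apply dot_unit_l_nonzero.
  apply (adm_I2 frame t0 t); [lra | lra | apply tangent_llim, Ht | exact Hg0].
Qed.

Lemma velocity_g1 t : t0 < t < t1 -> dot (v t) g1 <> 0.
Proof.
  intros Ht. apply dot_unit_l_nonzero.
  apply (adm_I1 frame t t1); [lra | lra | apply tangent_rlim, Ht | exact Hg1].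
Qed.

Lemma tangent_transversal_before u t : t0 < u -> u < t <= t1 ->
  dot (unit_tangent v u) (osc_normal v w t) <> 0.
Proof.
  intros Hu Ht. apply dot_unit_r_nonzero.
  apply (adm_I1 frame u t); [lra | lra | apply tangent_rlim; lra | apply binormal_llim; lra].
Qed.

Lemma tangent_transversal_after u t : t0 < t -> t < u <= t1 ->
  dot (unit_tangent v u) (osc_normal v w t) <> 0.
Proof.
  intros Ht Hu. apply dot_unit_r_nonzero.
  apply (adm_I2 frame t u); [lra | lra | apply tangent_llim; lra | apply binormal_rlim; lra].
Qed.

Definition tangent_chord_det (s1 s2 : R) : R :=
  dot (cross (unit_tangent v s1) (vsub (p s2) (p s1))) (unit_tangent v s2).

Lemma tangent_chord_det_nonzero s1 s2 : t0 < s1 -> s1 < s2 <= t1 -> tangent_chord_det s1 s2 <> 0.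
Proof.
  intros H1 H2. apply (adm_II frame s1 s2); [lra | lra | apply tangent_rlim; lra | apply tangent_llim; lra].
Qed.

Lemma chord_skew_t0 t : t0 < t <= t1 -> dot (cross a0 (vsub (p t) (p t0))) (v t) <> 0.
Proof.
  intros Ht. apply dot_unit_r_nonzero.
  apply (adm_II frame t0 t); [lra | lra | exact Ha0 | apply tangent_llim, Ht].
Qed.

Lemma chord_skew_t1 t : t0 < t < t1 -> dot (cross (v t) (vsub (p t1) (p t))) a1 <> 0.
Proof.
  intros Ht E. apply (adm_II frame t t1 (unit_tangent v t) a1); [lra | lra | apply tangent_rlim, Ht | exact Ha1 |].
  unfold unit_tangent, unit. replace 0 with (/ vnorm (v t) * 0) by ring. rewrite <- E. vring.
Qed.

Lemma chord_skew_ends : dot (cross a0 (vsub (p t1) (p t0))) a1 <> 0.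
Proof. apply (adm_II frame t0 t1); [lra | lra | exact Ha0 | exact Ha1]. Qed.

Lemma chord_transversal_t0 t : t0 < t <= t1 -> dot (vsub (p t0) (p t)) (osc_normal v w t) <> 0.
Proof.
  intros Ht. apply dot_unit_r_nonzero.
  apply (adm_III1 frame t0 t); [lra | lra | apply binormal_llim, Ht].
Qed.

Lemma chord_g1 : dot (vsub (p t0) (p t1)) g1 <> 0.
Proof. apply (adm_III1 frame t0 t1); [lra | lra | exact Hg1]. Qed.

Lemma chord_g0 : dot (vsub (p t1) (p t0)) g0 <> 0.
Proof. apply (adm_III2 frame t0 t1); [lra | lra | exact Hg0]. Qed.

Variables l m : R.
Let r0 := p t0.
Let r3 := p t1.
Let r1 := vadd r0 (vscale l a0).
Let r2 := vadd r3 (vscale m a1).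
Hypothesis r1_in_O0 : on_plane (p t0) g0 r1.
Hypothesis r1_in_O1 : on_plane (p t1) g1 r1.
Hypothesis r2_in_O0 : on_plane (p t0) g0 r2.
Hypothesis r2_in_O1 : on_plane (p t1) g1 r2.

(* The vertices [r1], [r2] differ from [r0], [r3], and from each other, because of (III)
   and (II) respectively. *)
Lemma l_nonzero : l <> 0.
Proof.
  intros E. apply chord_g1. rewrite <- r1_in_O1. unfold on_plane, r1, r0. rewrite E. vring.
Qed.

Lemma m_nonzero : m <> 0.
Proof.
  intros E. apply chord_g0. rewrite <- r2_in_O0. unfold on_plane, r2, r3. rewrite E. vring.
Qed.

Lemma r1_neq_r2 : vsub r2 r1 <> v0.
Proof.
  intros E. apply chord_skew_ends.
  replace (vsub (p t1) (p t0)) with (vsub (vscale l a0) (vscale m a1)).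
  - vring.
  - unfold r1, r2, r0, r3 in E. apply V3_ext; vsimpl; injection E; lra.
Qed.

(* Edge [r0 r1] runs along the tangent at [t0], which by (I) is transversal to the
   osculating planes at later parameters. *)
Lemma edge01_transversal s : t0 < s < t1 -> dot (vsub r1 r0) (osc_normal v w s) <> 0.
Proof.
  intros Hs. replace (dot (vsub r1 r0) (osc_normal v w s)) with (l * dot a0 (osc_normal v w s))
    by (unfold r1; vring).
  apply Rmult_integral_contrapositive. split; [exact l_nonzero | apply a0_transversal; lra].
Qed.

(* Edge [r0 r1] is never coplanar with the chord from [r0] and the tangent, by (II). *)
Lemma edge01_skew s : t0 < s < t1 -> det3 (vsub (p s) r0) (vsub r1 r0) (v s) <> 0.
Proof.
  intros Hs. replace (det3 (vsub (p s) r0) (vsub r1 r0) (v s))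
    with (- l * dot (cross a0 (vsub (p s) (p t0))) (v s)) by (unfold r1, r0; vring).
  apply Rmult_integral_contrapositive. split.
  - apply Ropp_neq_0_compat, l_nonzero.
  - apply chord_skew_t0; lra.
Qed.

(* The osculating plane at an interior [s] never passes through [r0], by (III). *)
Lemma edge01_param_nonzero s : t0 < s < t1 -> osc_param r0 (vsub r1 r0) s <> 0.
Proof.
  intros Hs E. unfold osc_param, Rdiv in E. apply Rmult_integral in E. destruct E as [E|E].
  - apply (chord_transversal_t0 s); [lra|].
    replace (dot (vsub (p t0) (p s)) (osc_normal v w s))
      with (- dot (vsub (p s) r0) (osc_normal v w s)) by (unfold r0; vring).
    rewrite E. ring.
  - revert E. apply Rinv_neq_0_compat, edge01_transversal, Hs.
Qed.

(* At [t1] the osculating plane passes through [r1], so the parameter tends to 1. *)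
Lemma edge01_left_lim : left_lim (osc_param r0 (vsub r1 r0)) t1 1.
Proof.
  assert (E1 : dot (vsub r1 r0) (osc_normal v w t1) <> 0).
  { replace (dot (vsub r1 r0) (osc_normal v w t1)) with (l * dot a0 (osc_normal v w t1))
      by (unfold r1; vring).
    apply Rmult_integral_contrapositive. split; [exact l_nonzero | apply a0_transversal; lra]. }
  assert (Hr1 : dot (vsub r1 (p t1)) (osc_normal v w t1) = 0).
  { apply Rmult_eq_reg_l with (/ vnorm (osc_normal v w t1)).
    - rewrite <- dot_unit_r. fold (unit_binormal v w t1). rewrite <- g1_unit_binormal.
      rewrite r1_in_O1. ring.
    - apply Rgt_not_eq, inv_vnorm_pos, (arc_normal arc); lra. }
  replace 1 with (osc_param r0 (vsub r1 r0) t1).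
  - apply left_lim_of_cont, osc_param_cont; [lra | exact E1].
  - unfold osc_param. apply Rmult_eq_reg_r with (dot (vsub r1 r0) (osc_normal v w t1)); [|exact E1].
    field_simplify; [|exact E1]. revert Hr1. vsimpl. intros Hr1. lra.
Qed.

(* Edge [r2 r3] runs along the tangent at [t1], transversal to the earlier osculating
   planes by (I). *)
Lemma edge23_transversal s : t0 < s < t1 -> dot (vsub r3 r2) (osc_normal v w s) <> 0.
Proof.
  intros Hs. replace (dot (vsub r3 r2) (osc_normal v w s)) with (- m * dot a1 (osc_normal v w s))
    by (unfold r2; vring).
  apply Rmult_integral_contrapositive. split.
  - apply Ropp_neq_0_compat, m_nonzero.
  - apply a1_transversal, Hs.
Qed.

(* Edge [r2 r3] is never coplanar with the chord to [r2] and the tangent, by (II). *)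
Lemma edge23_skew s : t0 < s < t1 -> det3 (vsub (p s) r2) (vsub r3 r2) (v s) <> 0.
Proof.
  intros Hs. replace (det3 (vsub (p s) r2) (vsub r3 r2) (v s))
    with (m * dot (cross (v s) (vsub (p t1) (p s))) a1) by (unfold r2, r3; vring).
  apply Rmult_integral_contrapositive. split; [exact m_nonzero | apply chord_skew_t1, Hs].
Qed.

(* At [t0] the osculating plane passes through [r2], so the parameter tends to 0. *)
Lemma edge23_right_lim : right_lim (osc_param r2 (vsub r3 r2)) t0 0.
Proof.
  set (G := unit_binormal v w).
  assert (Hden : dot (vsub r3 r2) g0 <> 0).
  { replace (dot (vsub r3 r2) g0) with (- m * dot a1 g0) by (unfold r2; vring).
    apply Rmult_integral_contrapositive. split; [apply Ropp_neq_0_compat, m_nonzero | exact a1_g0]. }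
  assert (Hnum : dot (vsub r0 r2) g0 = 0).
  { replace (dot (vsub r0 r2) g0) with (- dot (vsub r2 (p t0)) g0) by (unfold r0; vring).
    rewrite r2_in_O0. ring. }
  apply (right_lim_ext (fun s => dot (vsub (p s) r2) (G s) / dot (vsub r3 r2) (G s)) _ t0 t1);
    [exact Hlt | |].
  - intros s Hs. unfold osc_param, G, unit_binormal. rewrite !dot_unit_r. field. split.
    + apply edge23_transversal, Hs.
    + apply Rgt_not_eq, vnorm_pos, (arc_normal arc); lra.
  - replace 0 with (dot (vsub r0 r2) g0 / dot (vsub r3 r2) g0) by (rewrite Hnum; field; exact Hden).
    assert (HG : vright_lim G t0 g0) by (apply vright_lim_of_rlim, Hg0).
    apply right_lim_div; [| | exact Hden]; apply right_lim_dot; try exact HG.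
    + apply (vright_lim_of_vcont (fun s => vsub (p s) r2)).
      apply vcont_sub; [apply arc_cont_p; lra | apply vcont_const].
    + apply (vright_lim_of_vcont (fun _ => vsub r3 r2)), vcont_const.
Qed.

(* The parameter on [r0 r1] tends monotonically to 1 as [t -> t1], so [lambda01 - 1]
   has the sign opposite to its rate. *)
Lemma edge01_side t : t0 < t < t1 ->
  (osc_param r0 (vsub r1 r0) t - 1) * osc_param_rate r0 (vsub r1 r0) t < 0.
Proof. exact (osc_param_left_lim_sign _ _ edge01_transversal edge01_skew 1 edge01_left_lim t). Qed.

(* The parameter on [r2 r3] tends monotonically to 0 as [t -> t0], so it has the sign
   of its rate. *)
Lemma edge23_side t : t0 < t < t1 ->
  osc_param r2 (vsub r3 r2) t * osc_param_rate r2 (vsub r3 r2) t > 0.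
Proof.
  intros Ht. rewrite <- (Rminus_0_r (osc_param r2 (vsub r3 r2) t)).
  exact (osc_param_right_lim_sign _ _ edge23_transversal edge23_skew 0 edge23_right_lim t Ht).
Qed.

Lemma edge23_param_nonzero t : t0 < t < t1 -> osc_param r2 (vsub r3 r2) t <> 0.
Proof. intros Ht E. assert (K := edge23_side t Ht). rewrite E in K. lra. Qed.

(* Just before and just after [t] the velocity crosses the osculating plane at [t] with
   the sign of the torsion determinant: [v . c(t)] vanishes to second order at [t]. *)
Lemma velocity_crosses_osc_plane t : t0 < t < t1 ->
  exists e, 0 < e /\ t0 < t - e /\ t + e < t1 /\
    dot (v (t - e)) (osc_normal v w t) * det3 (v t) (w t) (z t) > 0 /\
    dot (v (t + e)) (osc_normal v w t) * det3 (v t) (w t) (z t) > 0.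
Proof.
  intros Ht. set (c := osc_normal v w t).
  set (d0 := Rmin (t - t0) (t1 - t)).
  assert (Hd0 : 0 < d0) by (apply Rmin_pos; lra).
  assert (Hd0l := Rmin_l (t - t0) (t1 - t)). assert (Hd0r := Rmin_r (t - t0) (t1 - t)).
  assert (Hin : forall x, Rabs (x - t) < d0 -> t0 <= x <= t1)
    by (intros x Hx; apply Rabs_def2 in Hx; unfold d0 in *; lra).
  assert (HD : dot (z t) c = det3 (v t) (w t) (z t)) by (unfold c, osc_normal; vring).
  destruct (second_order_sign (fun x => dot (v x) c) (fun x => dot (w x) c)
              (fun x => dot (z x) c) t d0 Hd0) as [e [He [Hbefore Hafter]]].
  - intros x Hx. assert (Hx' := Hin x Hx). split.
    + eapply derivable_pt_lim_eq;
        [apply (vder_dot v (fun _ => c) x (w x) v0); [apply (arc_dv arc); lra | apply vder_const]|].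
      vring.
    + eapply derivable_pt_lim_eq;
        [apply (vder_dot w (fun _ => c) x (z x) v0); [apply (arc_dw arc); lra | apply vder_const]|].
      vring.
  - unfold c, osc_normal. vring.
  - unfold c, osc_normal. vring.
  - apply cont_dot; [apply (arc_cz arc); lra | apply vcont_const].
  - rewrite HD. apply (arc_torsion arc); lra.
  - rewrite HD in Hbefore, Hafter.
    exists e. unfold d0 in *. repeat split; [lra | lra | lra | exact Hbefore | exact Hafter].
Qed.

(* The tangents at the two ends cross the osculating plane at [t] in the same
   direction: near [t] the velocity crosses it with the sign of the torsion determinant
   on both sides, and condition (I) forbids any further change of sign on the way to
   either end. *)
Lemma end_tangents_same_side t : t0 < t < t1 ->
  dot a0 (osc_normal v w t) * dot a1 (osc_normal v w t) > 0.
Proof.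
  intros Ht. set (c := osc_normal v w t).
  destruct (velocity_crosses_osc_plane t Ht) as [e [He [He0 [He1 [Hbefore Hafter]]]]].
  fold c in Hbefore, Hafter.
  assert (Tcont : forall u, t0 < u <= t1 -> continuity_pt (fun s => dot (unit_tangent v s) c) u)
    by (intros u Hu; apply cont_dot; [apply arc_cont_unit_tangent, Hu | apply vcont_const]).
  assert (A0 : dot a0 c * dot (unit_tangent v (t - e)) c > 0).
  { apply (right_lim_sign (fun s => dot (unit_tangent v s) c) t0 (t - e)); [lra | | |].
    - apply right_lim_dot; [apply vright_lim_of_rlim, Ha0 |].
      apply (vright_lim_of_vcont (fun _ => c)), vcont_const.
    - apply a0_transversal; lra.
    - intros s Hs. apply (sign_persists (fun u => dot (unit_tangent v u) c) s (t - e)); try lra.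
      + intros u Hu. apply Tcont; lra.
      + intros u Hu. apply tangent_transversal_before; lra. }
  assert (A1 : dot (unit_tangent v (t + e)) c * dot a1 c > 0).
  { rewrite a1_unit_tangent.
    apply (sign_persists (fun u => dot (unit_tangent v u) c) (t + e) t1); try lra.
    + intros u Hu. apply Tcont; lra.
    + intros u Hu. apply tangent_transversal_after; lra. }
  unfold unit_tangent in A0, A1. rewrite dot_unit_l in A0, A1.
  apply same_sign_pos_factor_r in A0; [|apply inv_vnorm_pos, (arc_v arc); lra].
  apply same_sign_pos_factor_l in A1; [|apply inv_vnorm_pos, (arc_v arc); lra].
  apply (same_sign_trans _ (dot (v (t - e)) c)); [exact A0|].
  apply (same_sign_trans _ (det3 (v t) (w t) (z t))); [exact Hbefore|].
  apply (same_sign_trans _ (dot (v (t + e)) c)); [rewrite Rmult_comm; exact Hafter | exact A1].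
Qed.

(* The chords from [t] to the two ends are seen from the end tangents with the same
   orientation: by condition (II) the determinant [tangent_chord_det s1 s2] never
   vanishes, so it keeps its sign as [s1] and [s2] move, and its limit as [s1 -> t0]
   is nonzero. *)
Lemma end_chords_same_side t : t0 < t < t1 ->
  dot (cross a0 (vsub (p t) (p t0))) (v t) * dot (cross (v t) (vsub (p t1) (p t))) a1 > 0.
Proof.
  intros Ht.
  assert (Hk : 0 < / vnorm (v t)) by (apply inv_vnorm_pos, (arc_v arc); lra).
  set (M := tangent_chord_det t t1).
  assert (Inner : forall s, t0 < s < t -> tangent_chord_det s t * M > 0).
  { intros s Hs. apply (same_sign_trans _ (tangent_chord_det s t1)).
    - apply (sign_persists (fun u => tangent_chord_det s u) t t1); try lra.
      + intros u Hu. apply cont_dot; [|apply arc_cont_unit_tangent; lra].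
        apply vcont_cross; [apply vcont_const|].
        apply vcont_sub; [apply arc_cont_p; lra | apply vcont_const].
      + intros u Hu. apply tangent_chord_det_nonzero; lra.
    - apply (sign_persists (fun u => tangent_chord_det u t1) s t); try lra.
      + intros u Hu. apply cont_dot; [|apply vcont_const].
        apply vcont_cross; [apply arc_cont_unit_tangent; lra|].
        apply vcont_sub; [apply vcont_const | apply arc_cont_p; lra].
      + intros u Hu. apply tangent_chord_det_nonzero; lra. }
  assert (Scale0 : dot a0 (cross (vsub (p t) (p t0)) (unit_tangent v t))
                   = / vnorm (v t) * dot (cross a0 (vsub (p t) (p t0))) (v t))
    by (unfold unit_tangent, unit; vring).
  assert (Scale1 : M = / vnorm (v t) * dot (cross (v t) (vsub (p t1) (p t))) a1)
    by (unfold M, tangent_chord_det; rewrite <- a1_unit_tangent; unfold unit_tangent, unit; vring).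
  assert (Lim : dot a0 (cross (vsub (p t) (p t0)) (unit_tangent v t)) * M > 0).
  { apply (right_lim_sign (fun s => dot (unit_tangent v s) (cross (vsub (p t) (p s)) (unit_tangent v t)))
             t0 t); [lra | | |].
    - apply right_lim_dot; [apply vright_lim_of_rlim, Ha0 |].
      apply (vright_lim_of_vcont (fun s => cross (vsub (p t) (p s)) (unit_tangent v t))).
      apply vcont_cross; [|apply vcont_const].
      apply vcont_sub; [apply vcont_const | apply arc_cont_p; lra].
    - rewrite Scale0. apply Rmult_integral_contrapositive.
      split; [lra | apply chord_skew_t0; lra].
    - intros s Hs. replace (dot (unit_tangent v s) (cross (vsub (p t) (p s)) (unit_tangent v t)))
        with (tangent_chord_det s t) by (unfold tangent_chord_det; vring).
      apply Inner, Hs. }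
  rewrite Scale0, Scale1 in Lim.
  apply same_sign_pos_factor_l in Lim; [|exact Hk].
  apply same_sign_pos_factor_r in Lim; [exact Lim | exact Hk].
Qed.

(* The two signed offsets are
   [(lambda01 - 1) E1] and [lambda23 E3], where [lambda01 - 1] has the sign opposite to
   its rate and [lambda23] the sign of its rate ([edge01_side], [edge23_side]); the
   product of the two rates with [E1 E3] is positive by [end_tangents_same_side] and
   [end_chords_same_side]. *)
Lemma r1_r2_opposite_sides t : t0 < t < t1 ->
  dot (vsub (p t) r1) (osc_normal v w t) * dot (vsub (p t) r2) (osc_normal v w t) < 0.
Proof.
  intros Ht. set (c := osc_normal v w t).
  set (E1 := dot (vsub r1 r0) c). set (E3 := dot (vsub r3 r2) c).
  assert (HE1 : E1 <> 0) by (apply edge01_transversal, Ht).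
  assert (HE3 : E3 <> 0) by (apply edge23_transversal, Ht).
  replace (dot (vsub (p t) r1) c) with (dot (vsub (p t) r0) c - E1) by (unfold E1; vring).
  replace (dot (vsub (p t) r0) c - E1) with ((osc_param r0 (vsub r1 r0) t - 1) * E1)
    by (unfold E1, c, osc_param; field; exact HE1).
  replace (dot (vsub (p t) r2) c) with (osc_param r2 (vsub r3 r2) t * E3)
    by (unfold E3, c, osc_param; field; exact HE3).
  apply (opposite_signs_of_rates _ _ (osc_param_rate r0 (vsub r1 r0) t)
           (osc_param_rate r2 (vsub r3 r2) t)).
  - apply edge01_side, Ht.
  - apply edge23_side, Ht.
  - set (D := det3 (v t) (w t) (z t)).
    set (X0 := dot (cross a0 (vsub (p t) (p t0))) (v t)).
    set (X1 := dot (cross (v t) (vsub (p t1) (p t))) a1).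
    set (A0 := dot a0 c). set (A1 := dot a1 c).
    assert (Prod : osc_param_rate r0 (vsub r1 r0) t * osc_param_rate r2 (vsub r3 r2) t * (E1 * E3)
                   = (D * D) * (l * l) * (m * m) * (X0 * X1) * (A0 * A1))
      by (unfold osc_param_rate, E1, E3, D, X0, X1, A0, A1, c, r1, r2, r0, r3; vring).
    rewrite Prod.
    assert (0 < D * D) by (apply Rsqr_pos_lt, (arc_torsion arc); lra).
    assert (0 < l * l) by (apply Rsqr_pos_lt, l_nonzero).
    assert (0 < m * m) by (apply Rsqr_pos_lt, m_nonzero).
    assert (X := end_chords_same_side t Ht). assert (Y := end_tangents_same_side t Ht).
    apply Rmult_gt_0_compat; [|exact Y].
    apply Rmult_gt_0_compat; [|exact X].
    apply Rmult_gt_0_compat; [apply Rmult_gt_0_compat|]; assumption.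
Qed.

(* By the separation, edge [r1 r2] is transversal to the interior osculating planes. *)
Lemma edge12_transversal t : t0 < t < t1 -> dot (vsub r2 r1) (osc_normal v w t) <> 0.
Proof.
  intros Ht E. assert (K := r1_r2_opposite_sides t Ht).
  replace (dot (vsub (p t) r2) (osc_normal v w t))
    with (dot (vsub (p t) r1) (osc_normal v w t) - dot (vsub r2 r1) (osc_normal v w t)) in K
    by vring.
  rewrite E, Rminus_0_r in K. nra.
Qed.

Lemma edge12_param_nonzero t : t0 < t < t1 -> osc_param r1 (vsub r2 r1) t <> 0.
Proof.
  intros Ht E. unfold osc_param, Rdiv in E. apply Rmult_integral in E. destruct E as [E|E].
  - assert (K := r1_r2_opposite_sides t Ht). rewrite E in K. lra.
  - revert E. apply Rinv_neq_0_compat, edge12_transversal, Ht.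
Qed.

Lemma arc_side_of_O0 t : t0 < t < t1 -> dot (vsub (p t) r0) g0 * dot (v t) g0 > 0.
Proof.
  intros Ht.
  destruct (MVT_cor2 (fun s => dot (vsub (p s) r0) g0) (fun s => dot (v s) g0) t0 t)
    as [xi [E Hxi]]; [lra | |].
  - intros s Hs. eapply derivable_pt_lim_eq.
    + apply (vder_dot (fun s => vsub (p s) r0) (fun _ => g0) s (vsub (v s) v0) v0).
      * apply vder_sub; [apply (arc_dp arc); lra | apply vder_const].
      * apply vder_const.
    + vring.
  - replace (dot (vsub (p t0) r0) g0) with 0 in E by (unfold r0; vring).
    assert (Q : dot (v xi) g0 * dot (v t) g0 > 0).
    { apply (sign_persists (fun u => dot (v u) g0) xi t); try lra.
      + intros u Hu. apply cont_dot; [apply arc_cont_v; lra | apply vcont_const].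
      + intros u Hu. apply velocity_g0; lra. }
    rewrite Rminus_0_r in E. rewrite E.
    replace (dot (v xi) g0 * (t - t0) * dot (v t) g0)
      with ((dot (v xi) g0 * dot (v t) g0) * (t - t0)) by ring.
    apply Rmult_gt_0_compat; lra.
Qed.


Lemma arc_side_of_O1 t : t0 < t < t1 -> dot (vsub (p t) r3) g1 * dot (v t) g1 < 0.
Proof.
  intros Ht.
  destruct (MVT_cor2 (fun s => dot (vsub (p s) r3) g1) (fun s => dot (v s) g1) t t1)
    as [xi [E Hxi]]; [lra | |].
  - intros s Hs. eapply derivable_pt_lim_eq.
    + apply (vder_dot (fun s => vsub (p s) r3) (fun _ => g1) s (vsub (v s) v0) v0).
      * apply vder_sub; [apply (arc_dp arc); lra | apply vder_const].
      * apply vder_const.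
    + vring.
  - replace (dot (vsub (p t1) r3) g1) with 0 in E by (unfold r3; vring).
    assert (Q : dot (v t) g1 * dot (v xi) g1 > 0).
    { apply (sign_persists (fun u => dot (v u) g1) t xi); try lra.
      + intros u Hu. apply cont_dot; [apply arc_cont_v; lra | apply vcont_const].
      + intros u Hu. apply velocity_g1; lra. }
    replace (dot (vsub (p t) r3) g1) with (- (dot (v xi) g1 * (t1 - t))) by lra.
    replace (- (dot (v xi) g1 * (t1 - t)) * dot (v t) g1)
      with (- ((dot (v t) g1 * dot (v xi) g1) * (t1 - t))) by ring.
    assert (0 < (dot (v t) g1 * dot (v xi) g1) * (t1 - t)) by (apply Rmult_gt_0_compat; lra).
    lra.
Qed.

(* Edge [r1 r2] lies on the common line of the end osculating planes, whereas the
   arc point [p t] lies strictly on determined sides of both planes; hence the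
   chord from [r1] to [p t], the edge and the velocity are never coplanar. *)
Lemma edge12_skew t : t0 < t < t1 -> det3 (vsub (p t) r1) (vsub r2 r1) (v t) <> 0.
Proof.
  intros Ht Hdet. apply r1_neq_r2.
  assert (D0 : dot (vsub r2 r1) g0 = 0).
  { replace (dot (vsub r2 r1) g0) with (dot (vsub r2 (p t0)) g0 - dot (vsub r1 (p t0)) g0) by vring.
    rewrite r1_in_O0, r2_in_O0. ring. }
  assert (D1 : dot (vsub r2 r1) g1 = 0).
  { replace (dot (vsub r2 r1) g1) with (dot (vsub r2 (p t1)) g1 - dot (vsub r1 (p t1)) g1) by vring.
    rewrite r1_in_O1, r2_in_O1. ring. }
  assert (U0 : dot (vsub (p t) r1) g0 = dot (vsub (p t) r0) g0).
  { replace (dot (vsub (p t) r1) g0) with (dot (vsub (p t) r0) g0 - dot (vsub r1 (p t0)) g0)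
      by (unfold r0; vring).
    rewrite r1_in_O0. ring. }
  assert (U1 : dot (vsub (p t) r1) g1 = dot (vsub (p t) r3) g1).
  { replace (dot (vsub (p t) r1) g1) with (dot (vsub (p t) r3) g1 - dot (vsub r1 (p t1)) g1)
      by (unfold r3; vring).
    rewrite r1_in_O1. ring. }
  assert (S0 := arc_side_of_O0 t Ht). assert (S1 := arc_side_of_O1 t Ht).
  assert (Hh0 : dot (v t) g0 <> 0) by (intros E; rewrite E in S0; lra).
  apply (zero_of_parallel _ (v t) g0); [|exact D0 | exact Hh0].
  apply (cross_zero_of_coplanar (vsub (p t) r1) _ _ g0 g1 Hdet D0 D1).
  rewrite U0, U1. intros E.
  assert (Hh1 : dot (v t) g1 <> 0) by (intros E'; rewrite E' in S1; lra).
  assert (0 < dot (v t) g0 * dot (v t) g0) by (apply Rsqr_pos_lt, Hh0).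
  assert (0 < dot (v t) g1 * dot (v t) g1) by (apply Rsqr_pos_lt, Hh1).
  set (k0 := dot (vsub (p t) r0) g0) in *. set (k1 := dot (vsub (p t) r3) g1) in *.
  set (h0 := dot (v t) g0) in *. set (h1 := dot (v t) g1) in *.
  assert (Eq : (k0 * h0) * (h1 * h1) = (k1 * h1) * (h0 * h0)).
  { replace ((k0 * h0) * (h1 * h1)) with ((k0 * h1) * (h0 * h1)) by ring.
    replace (k0 * h1) with (k1 * h0) by lra. ring. }
  nra.
Qed.

Lemma tetrahedron_meets_monotone :
  exists p01 p12 p23 : R -> V3,
    (forall t, t0 < t < t1 ->
       osc_unique_meet t r0 r1 (p01 t) /\ osc_unique_meet t r1 r2 (p12 t) /\
       osc_unique_meet t r2 r3 (p23 t)) /\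
    strictly_monotone_on t0 t1 (fun t => vnorm (vsub (p01 t) r0)) /\
    strictly_monotone_on t0 t1 (fun t => vnorm (vsub (p12 t) r1)) /\
    strictly_monotone_on t0 t1 (fun t => vnorm (vsub (p23 t) r2)).
Proof.
  exists (osc_meet r0 r1), (osc_meet r1 r2), (osc_meet r2 r3).
  split; [|split; [|split]].
  - intros t Ht. split; [|split]; apply osc_meet_unique; try lra.
    + apply edge01_transversal, Ht.
    + apply edge12_transversal, Ht.
    + apply edge23_transversal, Ht.
  - exact (osc_meet_dist_monotone r0 r1 edge01_transversal edge01_skew edge01_param_nonzero).
  - exact (osc_meet_dist_monotone r1 r2 edge12_transversal edge12_skew edge12_param_nonzero).
  - exact (osc_meet_dist_monotone r2 r3 edge23_transversal edge23_skew edge23_param_nonzero).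
Qed.

End Tetrahedron.
End Arc.

(* A rational curve defined on [t0, t1], without character points in (t0, t1], is a
   regular arc: stationary points are singular, and inflections and torsion zeros are
   excluded explicitly. *)
Lemma regular_arc_of_curve (r : curve) (t0 t1 : R) :
  (forall t, t0 <= t <= t1 -> defined_at r t) -> t0 < t1 ->
  (forall s, t0 < s <= t1 -> ~ character_param r s) ->
  regular_arc (pos r) (d1 r) (d2 r) (d3 r) t0 t1.
Proof.
  intros Hd Hlt Hc. constructor; [exact Hlt | intros t Ht .. ].
  - apply pos_vder, Hd, Ht.
  - apply (pos_vder (rD r)), defined_rD, Hd, Ht.
  - apply (pos_vder (rD (rD r))), defined_rD, defined_rD, Hd, Ht.
  - eapply vcont_of_vder. apply (pos_vder (rD (rD (rD r)))), defined_rD, defined_rD, defined_rD, Hd, Ht.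
  - intros E. apply (Hc t Ht). left. left. exact E.
  - intros E. apply (Hc t Ht). right. left. unfold curvature. unfold osc_normal in E. rewrite E.
    unfold vnorm, dot, v0; simpl. replace (0 * 0 + 0 * 0 + 0 * 0) with 0 by ring.
    rewrite sqrt_0. unfold Rdiv. ring.
  - intros E. apply (Hc t Ht). right. right. exact E.
Qed.

Theorem theorem3 (r : curve) (t0 t1 : R) (r0 r1 r2 r3 : V3) :
  (forall t, t0 <= t <= t1 -> defined_at r t) ->
  proper_param r ->
  non_planar r ->
  admissible r t0 t1 ->
  assoc_tetrahedron r t0 t1 r0 r1 r2 r3 ->
  exists p01 p12 p23 : R -> V3,
    (forall t, t0 < t < t1 ->
       unique_meet r t r0 r1 (p01 t) /\
       unique_meet r t r1 r2 (p12 t) /\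
       unique_meet r t r2 r3 (p23 t)) /\
    strictly_monotone_on t0 t1 (fun t => vnorm (vsub (p01 t) r0)) /\
    strictly_monotone_on t0 t1 (fun t => vnorm (vsub (p12 t) r1)) /\
    strictly_monotone_on t0 t1 (fun t => vnorm (vsub (p23 t) r2)).
Proof.
  intros Hdef _ _ Hadm Htet.
  destruct Hadm as [Hlt [Hchar [I1 [I2 [II [III1 [III2 _]]]]]]].
  assert (arc := regular_arc_of_curve r t0 t1 Hdef Hlt Hchar).
  assert (frame : admissible_frame (pos r) (unit_tangent (d1 r)) (unit_binormal (d1 r) (d2 r)) t0 t1)
    by (constructor; assumption).
  destruct Htet as [a0 [g0 [a1 [g1 [Ha0 [Hg0 [Ha1 [Hg1 [-> [-> [[l ->] [H10 [H11 [[m ->] [H20 H21]]]]]]]]]]]]]]].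
  exact (tetrahedron_meets_monotone _ _ _ _ _ _ arc frame a0 g0 a1 g1 Ha0 Hg0 Ha1 Hg1
           l m H10 H11 H20 H21).
Qed.
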